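(* Let $p,g_i,S,d,R,\eta_i,\beta,f_\gamma,N,D,p^*$ and $Pol^r_{n',2d'}$ be as in the context. For each positive integer $r$ let $$l_r=\sup\Big\{\gamma\in\mathbb{R} : f_\gamma(z)-\tfrac{1}{r}\big(\textstyle\sum_{i=1}^N z_i^2\big)^D\in Pol^r_{N,2D}\Big\}$$ (with $\sup\emptyset=-\infty$), and let $m_r=\max_{i=1,\dots,r}l_i$. Then $m_r\le p^*$ for all $r$, $\{m_r\}$ is nondecreasing, and $\lim_{r\to\infty}m_r=p^*$.
   Context: Let $p,g_1,\dots,g_m$ be real polynomials in $x=(x_1,\dots,x_n)$ and let $S=\{x\in\mathbb{R}^n : g_i(x)\ge 0,\ i=1,\dots,m\}$. Let $p^*=\inf_{x\in S}p(x)$ (with $p^*=+\infty$ if $S=\emptyset$). Let $d\ge 1$ be the integer such that $2d$ is the smallest even integer larger than or equal to the maximum of the degrees of $p,g_1,\dots,g_m$. Assume there is $R>0$ with $\sum_{i=1}^n x_i^2\le R$ for all $x\in S$. Let $\eta_1,\dots,\eta_m$ be real numbers with $g_i(x)\le\eta_i$ for all $x\in S$, and let $\beta$ be a real number with $-p(x)\le\beta$ for all $x\in S$. For a polynomial $q$ in $x$ of degree at most $2d$, $y^{2d}q(x/y)$ denotes its homogenization to a form of degree $2d$ in $(x,y)$. For $\gamma\in\mathbb{R}$ define the form in the variables $z=(x,s,y)=(x_1,\dots,x_n,s_0,\dots,s_{m+1},y)$: $$f_\gamma(x,s,y)=\big(\gamma y^{2d}-y^{2d}p(x/y)-s_0^2y^{2d-2}\big)^2+\sum_{i=1}^m\big(y^{2d}g_i(x/y)-s_i^2y^{2d-2}\big)^2+\Big(\big(R+\textstyle\sum_{i=1}^m\eta_i+\beta+\gamma\big)^d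 y^{2d}-\big(\sum_{i=1}^n x_i^2+\sum_{i=0}^m s_i^2\big)^d-s_{m+1}^{2d}\Big)^2.$$ Set $N=n+m+3$ and $D=2d$, so $f_\gamma$ is a form of degree $2D$ in $N$ variables. For a form $q$ in $n'$ variables and $v,w\in\mathbb{R}^{n'}$, $q(v^2-w^2)$ denotes $q(v_1^2-w_1^2,\dots,v_{n'}^2-w_{n'}^2)$. For integers $n',d',r\ge1$ define $Pol^r_{n',2d'}$ as the set of forms $q$ of degree $2d'$ in $n'$ variables such that the polynomial $$\Big(q(v^2-w^2)+\tfrac{1}{2r}\Big(\sum_{i=1}^{n'}(v_i^4+w_i^4)\Big)^{d'}\Big)\cdot\Big(\sum_{i=1}^{n'}v_i^2+\sum_{i=1}^{n'}w_i^2\Big)^{r^2}$$ in the variables $(v,w)\in\mathbb{R}^{2n'}$ has all coefficients nonnegative. *)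

From Stdlib Require Import Reals List Arith ClassicalEpsilon.
Import ListNotations.
Open Scope R_scope.

(* A monomial is an exponent vector: entry i is the exponent of variable i
   (variables are indexed from 0; missing trailing entries mean exponent 0). *)
Definition monom := list nat.

(* A polynomial is a finite formal sum of terms  c * X^alpha . *)
Definition mpoly := list (R * monom).

Definition mexp (a : monom) (i : nat) : nat := nth i a 0%nat.

(* equality of exponent vectors (up to trailing zeros) *)
Definition meq (a b : monom) : bool :=
  forallb (fun i => Nat.eqb (mexp a i) (mexp b i)) (seq 0 (Nat.max (length a) (length b))).

Definition mdeg (a : monom) : nat := list_sum a.

Fixpoint madd (a b : monom) : monom :=
  match a, b with
  | [], _ => b
  | _, [] => a
  | x :: a', y :: b' => (x + y)%nat :: madd a' b'
  end.

Definition munit (i k : nat) : monom := repeat 0%nat i ++ [k].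

Definition coef (P : mpoly) (a : monom) : R :=
  fold_right (fun t acc => if meq a (snd t) then fst t + acc else acc) 0 P.

Definition pconst (c : R) : mpoly := [(c, [])].
Definition pvar (i : nat) : mpoly := [(1, munit i 1)].
Definition padd (P Q : mpoly) : mpoly := P ++ Q.
Definition pscale (c : R) (P : mpoly) : mpoly := map (fun t => (c * fst t, snd t)) P.
Definition psub (P Q : mpoly) : mpoly := padd P (pscale (-1) Q).
Definition pmul (P Q : mpoly) : mpoly :=
  flat_map (fun s => map (fun t => (fst s * fst t, madd (snd s) (snd t))) Q) P.
Fixpoint ppow (P : mpoly) (k : nat) : mpoly :=
  match k with O => pconst 1 | S k' => pmul P (ppow P k') end.
Definition psum (l : list nat) (F : nat -> mpoly) : mpoly :=
  fold_right (fun i acc => padd (F i) acc) [] l.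

Definition psubst (P : mpoly) (sigma : nat -> mpoly) : mpoly :=
  flat_map (fun t =>
     pmul (pconst (fst t))
          (fold_right (fun i acc => pmul (ppow (sigma i) (mexp (snd t) i)) acc)
                      (pconst 1) (seq 0 (length (snd t))))) P.

Definition meval (a : monom) (x : nat -> R) : R :=
  fold_right (fun i acc => x i ^ mexp a i * acc) 1 (seq 0 (length a)).
Definition peval (P : mpoly) (x : nat -> R) : R :=
  fold_right (fun t acc => fst t * meval (snd t) x + acc) 0 P.

(* total degree (the zero polynomial gets degree 0) *)
Definition deg (P : mpoly) : nat :=
  fold_right (fun t acc =>
     if Req_EM_T (coef P (snd t)) 0 then acc else Nat.max (mdeg (snd t)) acc) 0%nat P.

Definition in_vars (n : nat) (P : mpoly) : Prop :=
  forall a, coef P a <> 0 -> forall i, (n <= i)%nat -> mexp a i = 0%nat.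

Definition is_form (n k : nat) (P : mpoly) : Prop :=
  in_vars n P /\ forall a, coef P a <> 0 -> mdeg a = k.

Definition nonneg_coefs (P : mpoly) : Prop := forall a, 0 <= coef P a.

(* homogenization  y^k q(x/y)  where y is the variable of index yi
   (meaningful when deg q <= k) *)
Definition homog (k yi : nat) (q : mpoly) : mpoly :=
  map (fun t => (fst t, madd (snd t) (munit yi (k - mdeg (snd t))))) q.

(* variables v_i = X_i (i < n'), w_i = X_{n'+i} (i < n') *)
Definition Pol (r n' d' : nat) (q : mpoly) : Prop :=
  is_form n' (2 * d') q /\
  nonneg_coefs
    (pmul
       (padd (psubst q (fun i => psub (ppow (pvar i) 2) (ppow (pvar (n' + i)) 2)))
             (pscale (1 / (2 * INR r))
                (ppow (psum (seq 0 n') (fun i => padd (ppow (pvar i) 4)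
                                                      (ppow (pvar (n' + i)) 4))) d')))
       (ppow (padd (psum (seq 0 n') (fun i => ppow (pvar i) 2))
                   (psum (seq 0 n') (fun i => ppow (pvar (n' + i)) 2))) (r * r))).

Inductive ER := Fin (x : R) | PInf | MInf.

Definition ER_le (a b : ER) : Prop :=
  match a, b with
  | MInf, _ => True
  | _, PInf => True
  | Fin x, Fin y => x <= y
  | _, _ => False
  end.

Definition ER_max (a b : ER) : ER :=
  match a, b with
  | MInf, _ => b
  | _, MInf => a
  | PInf, _ => PInf
  | _, PInf => PInf
  | Fin x, Fin y => Fin (Rmax x y)
  end.

Definition ER_opp (a : ER) : ER :=
  match a with Fin x => Fin (- x) | PInf => MInf | MInf => PInf end.

Definition ER_sup (E : R -> Prop) : ER :=
  match excluded_middle_informative (exists x, E x) with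
  | right _ => MInf
  | left ne =>
      match excluded_middle_informative (bound E) with
      | left b => Fin (proj1_sig (completeness E b ne))
      | right _ => PInf
      end
  end.

(* infimum in the extended reals; inf of the empty set is +infinity *)
Definition ER_inf (E : R -> Prop) : ER := ER_opp (ER_sup (fun x => E (- x))).

Definition ER_cv (u : nat -> ER) (l : ER) : Prop :=
  match l with
  | Fin a => forall eps, 0 < eps -> exists N, forall k, (N <= k)%nat ->
               exists x, u k = Fin x /\ Rabs (x - a) < eps
  | PInf => forall M, exists N, forall k, (N <= k)%nat -> ER_le (Fin M) (u k) /\ u k <> Fin M
  | MInf => forall M, exists N, forall k, (N <= k)%nat -> ER_le (u k) (Fin M) /\ u k <> Fin M
  end.

(* p, g_1, ..., g_m : polynomials in x = (X_0, ..., X_{n-1}) *)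

Definition in_S (g : nat -> mpoly) (m : nat) (x : nat -> R) : Prop :=
  forall i, (1 <= i <= m)%nat -> 0 <= peval (g i) x.

Definition pstar (p : mpoly) (g : nat -> mpoly) (m : nat) : ER :=
  ER_inf (fun v => exists x, in_S g m x /\ v = peval p x).

Definition max_deg (p : mpoly) (g : nat -> mpoly) (m : nat) : nat :=
  fold_right (fun i acc => Nat.max (deg (g i)) acc) (deg p) (seq 1 m).

(* d >= 1 and 2d is the smallest even integer >= max_deg
   (with the convention d = 1 when max_deg <= 2) *)
Definition d_spec (d maxdeg : nat) : Prop :=
  (1 <= d)%nat /\ (maxdeg <= 2 * d)%nat /\ (d = 1%nat \/ (2 * d - 2 < maxdeg)%nat).

Definition sumR (l : list nat) (F : nat -> R) : R :=
  fold_right (fun i acc => F i + acc) 0 l.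

(* Variables of f_gamma: z = (x_1..x_n, s_0..s_{m+1}, y) encoded as
   x_i = X_{i-1}, s_j = X_{n+j}, y = X_{n+m+2}; N = n+m+3. *)
Definition f_gamma (n m d : nat) (Rad : R) (eta : nat -> R) (beta : R)
  (p : mpoly) (g : nat -> mpoly) (gamma : R) : mpoly :=
  let y := pvar (n + m + 2) in
  let s := fun j => pvar (n + j) in
  let h := fun q => homog (2 * d) (n + m + 2) q in
  padd
    (ppow (psub (psub (pmul (pconst gamma) (ppow y (2 * d))) (h p))
                (pmul (ppow (s 0%nat) 2) (ppow y (2 * d - 2)))) 2)
  (padd
    (psum (seq 1 m) (fun i =>
       ppow (psub (h (g i)) (pmul (ppow (s i) 2) (ppow y (2 * d - 2)))) 2))
    (ppow (psub (psub
         (pmul (pconst ((Rad + sumR (seq 1 m) eta + beta + gamma) ^ d)) (ppow y (2 * d)))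
         (ppow (padd (psum (seq 0 n) (fun i => ppow (pvar i) 2))
                     (psum (seq 0 (m + 1)) (fun j => ppow (s j) 2))) d))
         (ppow (s (m + 1)%nat) (2 * d))) 2)).

Definition l_seq (n m d : nat) (Rad : R) (eta : nat -> R) (beta : R)
  (p : mpoly) (g : nat -> mpoly) (r : nat) : ER :=
  let N := (n + m + 3)%nat in
  let D := (2 * d)%nat in
  ER_sup (fun gamma =>
    Pol r N D (psub (f_gamma n m d Rad eta beta p g gamma)
                    (pscale (1 / INR r)
                       (ppow (psum (seq 0 N) (fun i => ppow (pvar i) 2)) D)))).

(* m_r = max_{i=1..r} l_i  (m_0 = -infinity, unused) *)
Fixpoint m_seq (l : nat -> ER) (r : nat) : ER :=
  match r with O => MInf | S r' => ER_max (m_seq l r') (l r) end.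

From Stdlib Require Import Reals Rtopology List Arith Lia Lra Psatz Classical ClassicalEpsilon FunctionalExtensionality.
Import ListNotations.
Open Scope R_scope.

(* For [gamma < p*] the form [f_gamma] is positive on [R^N \ {0}]: at [y = 0] its last square is
   [((|x|^2 + |s|^2)^d + s_(m+1)^(2d))^2], and on the chart [y = 1] it vanishes only at points
   encoding some [x] in [S] with [p x <= gamma].  By compactness of the sphere
   [f_gamma >= c |z|^(2D)], so [q = f_gamma - |z|^(2D) / r] stays positive definite once [r >= 1/c].
   Then [q(v^2 - w^2) + (sum v_i^4 + w_i^4)^D / (2r)] is an even form bounded below on the sphere
   by a constant of order [1/r], and a quantitative version of Pólya's theorem shows that its
   product with [|(v,w)|^(2 r^2)] has nonnegative coefficients for [r] large: [l_r >= gamma]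
   eventually, whence [m_r -> p*].
   Conversely, if [gamma] is admissible at level [r] and [p x < gamma] for some [x] in [S], then
   [f_gamma] has a zero [z] with [y = 1]; evaluating the certificate at [v = sqrt z^+],
   [w = sqrt z^-] gives [0 <= - |z|^(2D) / (2r) < 0].  Hence [l_r <= p*]. *)

(** * Coefficient-weighted sums *)

Definition wsum (phi : monom -> R) (P : mpoly) : R :=
  fold_right (fun t acc => fst t * phi (snd t) + acc) 0 P.

(* [coef], [peval] and the other linear functionals on the list representation are all of the
   form [wsum phi]; when [phi] respects [meq] they only depend on the coefficients. *)
Definition meq_compat (phi : monom -> R) : Prop := forall a b, meq a b = true -> phi a = phi b.

Lemma mexp_overflow a i : (length a <= i)%nat -> mexp a i = 0%nat.
Proof. intros; unfold mexp; apply nth_overflow; auto. Qed.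

Lemma meq_spec a b : meq a b = true <-> forall i, mexp a i = mexp b i.
Proof.
  unfold meq; rewrite forallb_forall; split.
  - intros H i. destruct (lt_dec i (Nat.max (length a) (length b))).
    + apply Nat.eqb_eq, H, in_seq; lia.
    + rewrite !mexp_overflow by lia; auto.
  - intros H x _; apply Nat.eqb_eq, H.
Qed.

Lemma meq_refl a : meq a a = true.
Proof. apply meq_spec; auto. Qed.
Lemma meq_sym a b : meq a b = meq b a.
Proof.
  destruct (meq a b) eqn:E1; destruct (meq b a) eqn:E2; auto.
  - rewrite meq_spec in E1. rewrite <- E2. symmetry; apply meq_spec; intros; auto.
  - rewrite meq_spec in E2. rewrite <- E1; apply meq_spec; intros; auto.
Qed.
Lemma meq_trans a b c : meq a b = true -> meq b c = true -> meq a c = true.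
Proof. rewrite !meq_spec; intros H1 H2 i; rewrite H1; auto. Qed.

Lemma wsum_app phi P Q : wsum phi (P ++ Q) = wsum phi P + wsum phi Q.
Proof. induction P; simpl; [lra|]. rewrite IHP; lra. Qed.
Lemma wsum_ext phi psi P : (forall a, phi a = psi a) -> wsum phi P = wsum psi P.
Proof. intros H; induction P; simpl; auto. rewrite IHP, H; auto. Qed.
Lemma wsum_plus phi psi P : wsum (fun a => phi a + psi a) P = wsum phi P + wsum psi P.
Proof. induction P; simpl; [lra|]. rewrite IHP; lra. Qed.
Lemma wsum_scal c phi P : wsum (fun a => c * phi a) P = c * wsum phi P.
Proof. induction P; simpl; [lra|]. rewrite IHP; lra. Qed.
Lemma wsum_pscale c phi P : wsum phi (pscale c P) = c * wsum phi P.
Proof. induction P; simpl; [lra|]. rewrite IHP; lra. Qed.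
Lemma wsum_zero P : wsum (fun _ => 0) P = 0.
Proof. induction P; simpl; auto. rewrite IHP; lra. Qed.

Lemma coef_wsum P a : coef P a = wsum (fun b => if meq a b then 1 else 0) P.
Proof. induction P; simpl; auto. rewrite IHP. destruct (meq a (snd a0)); lra. Qed.

Lemma coef_app P Q a : coef (P ++ Q) a = coef P a + coef Q a.
Proof. rewrite !coef_wsum, wsum_app; auto. Qed.
Lemma coef_padd P Q a : coef (padd P Q) a = coef P a + coef Q a.
Proof. apply coef_app. Qed.
Lemma coef_pscale c P a : coef (pscale c P) a = c * coef P a.
Proof. rewrite !coef_wsum, wsum_pscale; auto. Qed.
Lemma coef_psub P Q a : coef (psub P Q) a = coef P a - coef Q a.
Proof. unfold psub; rewrite coef_padd, coef_pscale; lra. Qed.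

Lemma coef_meq_compat P : meq_compat (coef P).
Proof.
  intros a b H. rewrite !coef_wsum. apply wsum_ext. intros c.
  destruct (meq a c) eqn:E1; destruct (meq b c) eqn:E2; auto.
  - rewrite (meq_trans b a c) in E2; [discriminate| |auto]. rewrite meq_sym; auto.
  - rewrite (meq_trans a b c) in E1; auto; discriminate.
Qed.

Lemma wsum_split phi a0 P :
  wsum phi P = wsum phi (filter (fun t => meq a0 (snd t)) P)
          + wsum phi (filter (fun t => negb (meq a0 (snd t))) P).
Proof. induction P; simpl; [lra|]. destruct (meq a0 (snd a)); simpl; rewrite IHP; lra. Qed.

Lemma wsum_filter_meq phi a0 P : meq_compat phi ->
  wsum phi (filter (fun t => meq a0 (snd t)) P) = phi a0 * coef P a0.
Proof.
  intros Hi; induction P; simpl; [lra|].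
  destruct (meq a0 (snd a)) eqn:E; simpl; rewrite IHP; [|lra].
  rewrite (Hi (snd a) a0); [lra|]. rewrite meq_sym; auto.
Qed.

Lemma coef_filter_not a0 P a :
  coef (filter (fun t => negb (meq a0 (snd t))) P) a =
  if meq a a0 then 0 else coef P a.
Proof.
  induction P; simpl; [destruct (meq a a0); auto|].
  destruct (meq a0 (snd a1)) eqn:E; simpl; rewrite IHP.
  - destruct (meq a a0) eqn:E2; auto.
    destruct (meq a (snd a1)) eqn:E3; auto.
    rewrite (meq_trans a (snd a1) a0) in E2; [discriminate|auto|]. rewrite meq_sym; auto.
  - destruct (meq a a0) eqn:E2; auto.
    destruct (meq a (snd a1)) eqn:E3; auto.
    rewrite (meq_trans a0 a (snd a1)) in E; [discriminate| |auto]. rewrite meq_sym; auto.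
Qed.

Lemma filter_len_lt {A} (f : A -> bool) (l : list A) x :
  f x = false -> (length (filter f (x :: l)) < length (x :: l))%nat.
Proof.
  intros H; simpl; rewrite H. pose proof (filter_length_le f l). simpl; lia.
Qed.

Lemma wsum_nonneg phi P : meq_compat phi -> (forall a, 0 <= coef P a * phi a) -> 0 <= wsum phi P.
Proof.
  intros Hi. remember (length P) as k eqn:Hk. revert P Hk.
  induction k as [k IH] using lt_wf_ind. intros P Hk H.
  destruct P as [|t P']; [simpl; lra|].
  rewrite (wsum_split phi (snd t)), wsum_filter_meq by auto.
  assert (0 <= wsum phi (filter (fun t0 => negb (meq (snd t) (snd t0))) (t :: P'))).
  { eapply IH; [|reflexivity|].
    - subst k. apply filter_len_lt. rewrite meq_refl; auto.
    - intros a. rewrite coef_filter_not. destruct (meq a (snd t)); [lra|]. auto. }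
  specialize (H (snd t)). nra.
Qed.

Lemma wsum_vanish phi P : meq_compat phi -> (forall a, coef P a <> 0 -> phi a = 0) -> wsum phi P = 0.
Proof.
  intros Hi H.
  assert (Hz : forall c a, 0 <= coef P a * (c * phi a)).
  { intros c a. destruct (Req_dec (coef P a) 0) as [E|E]; [rewrite E|rewrite (H a E)]; lra. }
  assert (H1 : 0 <= wsum (fun a => 1 * phi a) P)
    by (apply wsum_nonneg; [intros a b E; rewrite (Hi a b E)|]; auto).
  assert (H2 : 0 <= wsum (fun a => -1 * phi a) P)
    by (apply wsum_nonneg; [intros a b E; rewrite (Hi a b E)|]; auto).
  rewrite wsum_scal in H1, H2. lra.
Qed.

Lemma wsum_coef_eq phi P Q : meq_compat phi -> (forall a, coef P a = coef Q a) -> wsum phi P = wsum phi Q.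
Proof.
  intros Hi H. assert (wsum phi (psub P Q) = 0).
  { apply wsum_vanish; auto. intros a Ha. rewrite coef_psub, H in Ha. lra. }
  unfold psub, padd in H0. rewrite wsum_app, wsum_pscale in H0. lra.
Qed.

Lemma wsum_ext_supp phi psi P : meq_compat phi -> meq_compat psi ->
  (forall a, coef P a <> 0 -> phi a = psi a) -> wsum phi P = wsum psi P.
Proof.
  intros H1 H2 H. assert (wsum (fun a => phi a - psi a) P = 0).
  { apply wsum_vanish. - intros a b E; rewrite (H1 a b E), (H2 a b E); auto.
    - intros a Ha; rewrite H; auto; lra. }
  assert (wsum (fun a => phi a + (-1) * psi a) P = wsum phi P - wsum psi P).
  { rewrite wsum_plus, wsum_scal; lra. }
  rewrite <- (wsum_ext (fun a => phi a - psi a)) in H3 by (intros; lra). lra.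
Qed.

Definition coef_l1 (P : mpoly) : R := fold_right (fun t acc => Rabs (fst t) + acc) 0 P.

Lemma wsum_abs_le phi P B : (forall a, Rabs (phi a) <= B) -> Rabs (wsum phi P) <= B * coef_l1 P.
Proof.
  intros H; induction P; simpl. - rewrite Rabs_R0; lra.
  - eapply Rle_trans; [apply Rabs_triang|]. rewrite Rabs_mult.
    specialize (H (snd a)). pose proof (Rabs_pos (fst a)). nra.
Qed.

Lemma coef_l1_nonneg P : 0 <= coef_l1 P.
Proof. induction P; simpl; [lra|]. pose proof (Rabs_pos (fst a)); lra. Qed.

Definition prodR (l : list nat) (f : nat -> R) : R := fold_right (fun i acc => f i * acc) 1 l.
Definition sumN (l : list nat) (f : nat -> nat) : nat := fold_right (fun i acc => (f i + acc)%nat) 0%nat l.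

Lemma prodR_app l1 l2 f : prodR (l1 ++ l2) f = prodR l1 f * prodR l2 f.
Proof. induction l1; simpl; [lra|]. rewrite IHl1; lra. Qed.
Lemma prodR_ext l f g : (forall i, In i l -> f i = g i) -> prodR l f = prodR l g.
Proof. induction l; simpl; intros; auto. f_equal; auto. Qed.
Lemma prodR_one l f : (forall i, In i l -> f i = 1) -> prodR l f = 1.
Proof. induction l; simpl; intros; auto. rewrite H, IHl; auto; lra. Qed.
Lemma prodR_mult l f g : prodR l (fun i => f i * g i) = prodR l f * prodR l g.
Proof. induction l; simpl; [lra|]. rewrite IHl; lra. Qed.
Lemma sumR_app l1 l2 f : sumR (l1 ++ l2) f = sumR l1 f + sumR l2 f.
Proof. induction l1; simpl; [lra|]. rewrite IHl1; lra. Qed.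
Lemma sumR_ext l f g : (forall i, In i l -> f i = g i) -> sumR l f = sumR l g.
Proof. unfold sumR; induction l; simpl; intros; auto. f_equal; auto. Qed.
Lemma sumN_app l1 l2 f : sumN (l1 ++ l2) f = (sumN l1 f + sumN l2 f)%nat.
Proof. induction l1; simpl; [lia|]. rewrite IHl1; lia. Qed.
Lemma sumN_ext l f g : (forall i, In i l -> f i = g i) -> sumN l f = sumN l g.
Proof. unfold sumN; induction l; simpl; intros; auto. Qed.
Lemma sumN_zero l f : (forall i, In i l -> f i = 0%nat) -> sumN l f = 0%nat.
Proof. unfold sumN; induction l; simpl; intros; auto. rewrite H, IHl; auto. Qed.

Lemma seq_split L1 L2 : (L1 <= L2)%nat -> seq 0 L2 = seq 0 L1 ++ seq L1 (L2 - L1).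
Proof. intros H. replace L2 with (L1 + (L2 - L1))%nat at 1 by lia. apply seq_app. Qed.

Lemma meval_seq a x L : (length a <= L)%nat ->
  meval a x = prodR (seq 0 L) (fun i => x i ^ mexp a i).
Proof.
  intros H. unfold meval. rewrite (seq_split (length a) L) by auto.
  change (fold_right (fun i acc => x i ^ mexp a i * acc) 1 (seq 0 (length a)))
    with (prodR (seq 0 (length a)) (fun i => x i ^ mexp a i)).
  rewrite prodR_app. rewrite (prodR_one (seq (length a) _)); [lra|].
  intros i Hi. apply in_seq in Hi. rewrite mexp_overflow by lia. auto.
Qed.

Lemma nth_nil0 i : nth i (@nil nat) 0%nat = 0%nat.
Proof. destruct i; auto. Qed.
Lemma mexp_madd a b i : mexp (madd a b) i = (mexp a i + mexp b i)%nat.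
Proof.
  revert b i; induction a as [|x a IH]; intros b i; destruct b as [|y b]; unfold mexp in *;
  destruct i; simpl; rewrite ?nth_nil0; auto; try lia; apply IH.
Qed.
Lemma madd_len a b : length (madd a b) = Nat.max (length a) (length b).
Proof. revert b; induction a; destruct b; simpl; auto. Qed.

Lemma meval_madd a b x : meval (madd a b) x = meval a x * meval b x.
Proof.
  set (L := Nat.max (length a) (length b)).
  rewrite !(meval_seq _ x L) by (unfold L; try rewrite madd_len; lia).
  rewrite <- prodR_mult. apply prodR_ext. intros; rewrite mexp_madd, pow_add; auto.
Qed.

Lemma mdeg_madd a b : mdeg (madd a b) = (mdeg a + mdeg b)%nat.
Proof.
  unfold mdeg; revert b; induction a; destruct b; simpl; auto.
  rewrite IHa; lia.
Qed.

Lemma sumN_shift l f : sumN (map S l) f = sumN l (fun i => f (S i)).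
Proof. induction l; simpl; auto. Qed.

Lemma mdeg_seq a L : (length a <= L)%nat -> mdeg a = sumN (seq 0 L) (mexp a).
Proof.
  intros H. rewrite (seq_split (length a) L) by auto. rewrite sumN_app.
  rewrite (sumN_zero (seq (length a) _)).
  2:{ intros i Hi; apply in_seq in Hi; apply mexp_overflow; lia. }
  rewrite Nat.add_0_r. clear. unfold mdeg. induction a; simpl; auto.
  rewrite <- seq_shift, sumN_shift. rewrite IHa. auto.
Qed.

Lemma mdeg_meq a b : meq a b = true -> mdeg a = mdeg b.
Proof.
  intros H; rewrite meq_spec in H.
  rewrite (mdeg_seq a (Nat.max (length a) (length b))), (mdeg_seq b (Nat.max (length a) (length b))) by lia.
  apply sumN_ext; auto.
Qed.

Lemma meval_meq a b x : meq a b = true -> meval a x = meval b x.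
Proof.
  intros H; rewrite meq_spec in H.
  rewrite (meval_seq a x (Nat.max (length a) (length b))), (meval_seq b x (Nat.max (length a) (length b))) by lia.
  apply prodR_ext; intros; rewrite H; auto.
Qed.

Lemma meval_meq_compat x : meq_compat (fun a => meval a x).
Proof. intros a b H; apply meval_meq; auto. Qed.

Lemma madd_meq_l s s' t : meq s s' = true -> meq (madd s t) (madd s' t) = true.
Proof. rewrite !meq_spec; intros H i; rewrite !mexp_madd, H; auto. Qed.
Lemma madd_meq_r s t t' : meq t t' = true -> meq (madd s t) (madd s t') = true.
Proof. rewrite !meq_spec; intros H i; rewrite !mexp_madd, H; auto. Qed.
Lemma madd_comm_meq s t : meq (madd s t) (madd t s) = true.
Proof. rewrite meq_spec; intros i; rewrite !mexp_madd; lia. Qed.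
Lemma madd_assoc_meq s t u : meq (madd (madd s t) u) (madd s (madd t u)) = true.
Proof. rewrite meq_spec; intros i; rewrite !mexp_madd; lia. Qed.

Lemma mexp_munit i k j : mexp (munit i k) j = if Nat.eqb j i then k else 0%nat.
Proof.
  unfold mexp, munit. destruct (lt_eq_lt_dec j i) as [[H|H]|H].
  - rewrite app_nth1 by (rewrite repeat_length; auto). rewrite nth_repeat.
    destruct (Nat.eqb_spec j i); auto; lia.
  - subst. rewrite app_nth2 by (rewrite repeat_length; auto). rewrite repeat_length, Nat.sub_diag.
    rewrite Nat.eqb_refl; auto.
  - rewrite app_nth2 by (rewrite repeat_length; lia). rewrite repeat_length.
    destruct (j - i)%nat eqn:E; [lia|]. simpl. destruct n; destruct (Nat.eqb_spec j i); auto; lia.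
Qed.

Lemma meval_munit i k x : meval (munit i k) x = x i ^ k.
Proof.
  rewrite (meval_seq _ x (S i)). 2:{ unfold munit; rewrite length_app, repeat_length; simpl; lia. }
  rewrite (seq_split i (S i)) by lia. rewrite prodR_app.
  rewrite prodR_one. 2:{ intros j Hj; apply in_seq in Hj. rewrite mexp_munit.
    destruct (Nat.eqb_spec j i); [lia|]; auto. }
  replace (S i - i)%nat with 1%nat by lia. simpl. rewrite mexp_munit, Nat.eqb_refl. lra.
Qed.

Lemma wsum_map_mul phi c s Q :
  wsum phi (map (fun t => (c * fst t, madd s (snd t))) Q) = c * wsum (fun t => phi (madd s t)) Q.
Proof. induction Q; simpl; [lra|]. rewrite IHQ. lra. Qed.

Lemma wsum_pmul phi P Q : wsum phi (pmul P Q) = wsum (fun s => wsum (fun t => phi (madd s t)) Q) P.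
Proof.
  induction P; simpl; auto. unfold pmul in *. simpl. rewrite wsum_app, IHP.
  rewrite wsum_map_mul. auto.
Qed.

Lemma wsum_inner_meq_compat phi Q : meq_compat phi -> meq_compat (fun s => wsum (fun t => phi (madd s t)) Q).
Proof. intros H s s' E. apply wsum_ext. intros t. apply H, madd_meq_l; auto. Qed.

Lemma wsum_pmul_r phi P Q Q' : meq_compat phi -> (forall a, coef Q a = coef Q' a) ->
  wsum phi (pmul P Q) = wsum phi (pmul P Q').
Proof.
  intros Hi H. rewrite !wsum_pmul. apply wsum_ext. intros s. apply wsum_coef_eq; auto.
  intros t t' E. apply Hi, madd_meq_r; auto.
Qed.

Lemma wsum_pmul_l phi P P' Q : meq_compat phi -> (forall a, coef P a = coef P' a) ->
  wsum phi (pmul P Q) = wsum phi (pmul P' Q).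
Proof. intros Hi H. rewrite !wsum_pmul. apply wsum_coef_eq; auto. apply wsum_inner_meq_compat; auto. Qed.

Lemma wsum_swap (F : monom -> monom -> R) P Q :
  wsum (fun s => wsum (fun t => F s t) Q) P = wsum (fun t => wsum (fun s => F s t) P) Q.
Proof.
  induction P; simpl. - rewrite wsum_zero; auto.
  - rewrite IHP. rewrite <- wsum_scal, <- wsum_plus. apply wsum_ext; intros; simpl; lra.
Qed.

Lemma wsum_pmul_comm phi P Q : meq_compat phi -> wsum phi (pmul P Q) = wsum phi (pmul Q P).
Proof.
  intros Hi. rewrite !wsum_pmul, wsum_swap. apply wsum_ext; intros t; apply wsum_ext; intros s.
  apply Hi, madd_comm_meq.
Qed.

Lemma wsum_pmul_assoc phi P Q S : meq_compat phi ->
  wsum phi (pmul (pmul P Q) S) = wsum phi (pmul P (pmul Q S)).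
Proof.
  intros Hi. rewrite wsum_pmul, wsum_pmul. rewrite wsum_pmul. apply wsum_ext; intros p.
  rewrite wsum_pmul. apply wsum_ext; intros q. apply wsum_ext; intros u. apply Hi, madd_assoc_meq.
Qed.

Lemma indicator_meq_compat a : meq_compat (fun b => if meq a b then 1 else 0).
Proof. intros b c E. destruct (meq a b) eqn:E1, (meq a c) eqn:E2; auto.
  - rewrite (meq_trans a b c) in E2; auto; discriminate.
  - rewrite (meq_trans a c b) in E1; auto; [discriminate|]. rewrite meq_sym; auto.
Qed.

Lemma coef_pmul_r P Q Q' a : (forall a, coef Q a = coef Q' a) -> coef (pmul P Q) a = coef (pmul P Q') a.
Proof. intros; rewrite !coef_wsum; apply wsum_pmul_r; auto; apply indicator_meq_compat. Qed.
Lemma coef_pmul_l P P' Q a : (forall a, coef P a = coef P' a) -> coef (pmul P Q) a = coef (pmul P' Q) a.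
Proof. intros; rewrite !coef_wsum; apply wsum_pmul_l; auto; apply indicator_meq_compat. Qed.
Lemma coef_pmul_comm P Q a : coef (pmul P Q) a = coef (pmul Q P) a.
Proof. rewrite !coef_wsum; apply wsum_pmul_comm; apply indicator_meq_compat. Qed.
Lemma coef_pmul_assoc P Q S a : coef (pmul (pmul P Q) S) a = coef (pmul P (pmul Q S)) a.
Proof. rewrite !coef_wsum; apply wsum_pmul_assoc; apply indicator_meq_compat. Qed.

Lemma peval_wsum P x : peval P x = wsum (fun a => meval a x) P.
Proof. reflexivity. Qed.
Lemma peval_app P Q x : peval (P ++ Q) x = peval P x + peval Q x.
Proof. rewrite !peval_wsum; apply wsum_app. Qed.
Lemma peval_pscale c P x : peval (pscale c P) x = c * peval P x.
Proof. rewrite !peval_wsum; apply wsum_pscale. Qed.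
Lemma peval_psub P Q x : peval (psub P Q) x = peval P x - peval Q x.
Proof. unfold psub, padd; rewrite peval_app, peval_pscale; lra. Qed.
Lemma peval_pconst c x : peval (pconst c) x = c.
Proof. unfold pconst, peval, meval; simpl; lra. Qed.
Lemma peval_pvar i x : peval (pvar i) x = x i.
Proof. unfold pvar, peval; simpl. rewrite meval_munit; simpl; lra. Qed.
Lemma peval_pmul P Q x : peval (pmul P Q) x = peval P x * peval Q x.
Proof.
  rewrite !peval_wsum, wsum_pmul. rewrite (wsum_ext _ (fun s => meval s x * wsum (fun a => meval a x) Q)).
  - rewrite (wsum_ext _ (fun s => wsum (fun a => meval a x) Q * meval s x)) by (intros; lra).
    rewrite wsum_scal; lra.
  - intros s. rewrite <- wsum_scal. apply wsum_ext. intros; apply meval_madd.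
Qed.
Lemma peval_ppow P k x : peval (ppow P k) x = peval P x ^ k.
Proof. induction k; simpl. - apply peval_pconst. - rewrite peval_pmul, IHk; auto. Qed.
Lemma peval_psum l F x : peval (psum l F) x = sumR l (fun i => peval (F i) x).
Proof. induction l; simpl; auto. unfold padd; rewrite peval_app, IHl; auto. Qed.

Definition mon_subst (sigma : nat -> mpoly) (a : monom) : mpoly :=
  fold_right (fun i acc => pmul (ppow (sigma i) (mexp a i)) acc) (pconst 1) (seq 0 (length a)).

Lemma psubst_eq P sigma : psubst P sigma = flat_map (fun t => pmul (pconst (fst t)) (mon_subst sigma (snd t))) P.
Proof. reflexivity. Qed.

Lemma wsum_flat_map phi (F : R * monom -> mpoly) P :
  wsum phi (flat_map F P) = fold_right (fun t acc => wsum phi (F t) + acc) 0 P.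
Proof. induction P; simpl; auto. rewrite wsum_app, IHP; auto. Qed.

Lemma peval_mon_subst sigma a x : peval (mon_subst sigma a) x = meval a (fun i => peval (sigma i) x).
Proof.
  unfold mon_subst, meval. induction (seq 0 (length a)); simpl. - apply peval_pconst.
  - rewrite peval_pmul, peval_ppow, IHl; auto.
Qed.

Lemma peval_psubst P sigma x : peval (psubst P sigma) x = peval P (fun i => peval (sigma i) x).
Proof.
  rewrite psubst_eq. rewrite peval_wsum, wsum_flat_map. induction P as [|t P IH]; [reflexivity|].
  change (peval (t :: P) ?z) with (fst t * meval (snd t) z + peval P z).
  rewrite <- IH. cbn [fold_right]. f_equal.
  rewrite <- peval_wsum, peval_pmul, peval_pconst, peval_mon_subst; auto.
Qed.

Definition supp (Q : monom -> Prop) (P : mpoly) : Prop := forall a, coef P a <> 0 -> Q a.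

Lemma supp_mono (Q Q' : monom -> Prop) P : (forall a, Q a -> Q' a) -> supp Q P -> supp Q' P.
Proof. unfold supp; auto. Qed.
Lemma supp_padd Q P P' : supp Q P -> supp Q P' -> supp Q (padd P P').
Proof. unfold supp; intros H1 H2 a Ha. rewrite coef_padd in Ha.
  destruct (Req_dec (coef P a) 0); [apply H2|apply H1]; auto; lra. Qed.
Lemma supp_pscale Q c P : supp Q P -> supp Q (pscale c P).
Proof. unfold supp; intros H a Ha. rewrite coef_pscale in Ha. apply H. intro E; apply Ha; rewrite E; lra. Qed.
Lemma supp_psub Q P P' : supp Q P -> supp Q P' -> supp Q (psub P P').
Proof. intros; apply supp_padd; auto; apply supp_pscale; auto. Qed.
Lemma supp_psum Q l F : (forall i, In i l -> supp Q (F i)) -> supp Q (psum l F).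
Proof. induction l; simpl; intros H. - intros a Ha; unfold coef in Ha; simpl in Ha; lra.
  - apply supp_padd; auto. Qed.

Lemma coef_pconst c a : coef (pconst c) a = if meq a [] then c else 0.
Proof. unfold coef, pconst; simpl. destruct (meq a []); lra. Qed.

Lemma supp_pconst c : supp (fun a => forall i, mexp a i = 0%nat) (pconst c).
Proof. intros a Ha. rewrite coef_pconst in Ha. destruct (meq a []) eqn:E; [|lra].
  rewrite meq_spec in E. intros i; rewrite E. destruct i; auto. Qed.

Lemma meq_compat_comp phi (h : monom -> monom) : meq_compat phi ->
  (forall a b, meq a b = true -> meq (h a) (h b) = true) -> meq_compat (fun a => phi (h a)).
Proof. intros H1 H2 a b E; apply H1, H2; auto. Qed.

Lemma supp_pmul Q1 Q2 P P' : supp Q1 P -> supp Q2 P' ->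
  supp (fun a => exists s t, Q1 s /\ Q2 t /\ forall i, mexp a i = (mexp s i + mexp t i)%nat) (pmul P P').
Proof.
  intros H1 H2 a Ha. match goal with |- ?G => destruct (classic G) as [|Hn]; auto end.
  exfalso. apply Ha. clear Ha.
  rewrite coef_wsum, wsum_pmul. apply wsum_vanish.
  - apply (wsum_inner_meq_compat (fun b => if meq a b then 1 else 0)), indicator_meq_compat.
  - intros s Hs. apply wsum_vanish.
    + apply (meq_compat_comp (fun b => if meq a b then 1 else 0) (madd s)); [apply indicator_meq_compat|]. intros; apply madd_meq_r; auto.
    + intros t Ht. destruct (meq a (madd s t)) eqn:E; auto.
      exfalso; apply Hn. exists s, t. split; [apply H1; auto|]. split; [apply H2; auto|].
      rewrite meq_spec in E. intros i; rewrite E, mexp_madd; auto.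
Qed.

Definition hmon (ev : bool) (n k : nat) (a : monom) : Prop :=
  (forall i, (n <= i)%nat -> mexp a i = 0%nat) /\ mdeg a = k /\
  (ev = true -> forall i, Nat.Even (mexp a i)).

Lemma sumN_plus l f g : sumN l (fun i => (f i + g i)%nat) = (sumN l f + sumN l g)%nat.
Proof. unfold sumN; induction l; simpl; auto. rewrite IHl; lia. Qed.

Lemma mdeg_sum a s t : (forall i, mexp a i = (mexp s i + mexp t i)%nat) -> mdeg a = (mdeg s + mdeg t)%nat.
Proof.
  intros H. set (L := Nat.max (length a) (Nat.max (length s) (length t))).
  rewrite (mdeg_seq a L), (mdeg_seq s L), (mdeg_seq t L) by (unfold L; lia).
  rewrite <- sumN_plus. apply sumN_ext; auto.
Qed.

Lemma supp_pmul_hmon ev n k1 k2 P Q : supp (hmon ev n k1) P -> supp (hmon ev n k2) Q ->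
  supp (hmon ev n (k1 + k2)) (pmul P Q).
Proof.
  intros H1 H2. eapply supp_mono; [|apply supp_pmul; eauto].
  intros a (s & t & (Hs1 & Hs2 & Hs3) & (Ht1 & Ht2 & Ht3) & H). split; [|split].
  - intros i Hi; rewrite H, Hs1, Ht1; auto.
  - rewrite (mdeg_sum a s t H); lia.
  - intros E i. rewrite H. destruct (Hs3 E i) as [u Hu], (Ht3 E i) as [v Hv]. exists (u+v)%nat; lia.
Qed.

Lemma mdeg_zero a : (forall i, mexp a i = 0%nat) -> mdeg a = 0%nat.
Proof. intros H. rewrite (mdeg_seq a (length a)) by lia. apply sumN_zero; auto. Qed.

Lemma supp_pconst_hmon ev n c : supp (hmon ev n 0) (pconst c).
Proof.
  eapply supp_mono; [|apply supp_pconst]. intros a H. split; [|split]; auto.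
  - apply mdeg_zero; auto.
  - intros _ i; rewrite H; exists 0%nat; lia.
Qed.

Lemma supp_ppow_hmon ev n k P j : supp (hmon ev n k) P -> supp (hmon ev n (j * k)) (ppow P j).
Proof.
  intros H; induction j; cbn [ppow]. - apply supp_pconst_hmon.
  - apply supp_pmul_hmon; auto.
Qed.

Lemma coef_pvar i a : coef (pvar i) a = if meq a (munit i 1) then 1 else 0.
Proof. unfold coef, pvar; simpl. destruct (meq a (munit i 1)); lra. Qed.

Lemma supp_pvarpow i k : supp (fun a => forall l, mexp a l = if Nat.eqb l i then k else 0%nat) (ppow (pvar i) k).
Proof.
  induction k; cbn [ppow].
  - eapply supp_mono; [|apply supp_pconst]. intros a H l; rewrite H; destruct (l =? i); auto.
  - assert (Hv : supp (fun a => forall l, mexp a l = if Nat.eqb l i then 1%nat else 0%nat) (pvar i)).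
    { intros a Ha. rewrite coef_pvar in Ha. destruct (meq a (munit i 1)) eqn:E; [|lra].
      rewrite meq_spec in E. intros l; rewrite E, mexp_munit; auto. }
    eapply supp_mono; [|apply (supp_pmul _ _ _ _ Hv IHk)].
    intros a (s & t & Hs & Ht & H) l. rewrite H, Hs, Ht. destruct (l =? i); lia.
Qed.

Lemma list_sum_repeat0 i : list_sum (repeat 0%nat i) = 0%nat.
Proof. induction i; simpl; auto. Qed.

Lemma mdeg_munit i k : mdeg (munit i k) = k.
Proof. unfold mdeg, munit. rewrite list_sum_app, list_sum_repeat0. simpl; lia. Qed.

Lemma supp_pvarpow_hmon ev n i k : (i < n)%nat -> (ev = true -> Nat.Even k) ->
  supp (hmon ev n k) (ppow (pvar i) k).
Proof.
  intros Hi He. eapply supp_mono; [|apply supp_pvarpow]. intros a H. split; [|split].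
  - intros l Hl; rewrite H. destruct (Nat.eqb_spec l i); auto; lia.
  - rewrite <- (mdeg_munit i k). apply mdeg_meq. apply meq_spec. intros l; rewrite H, mexp_munit; auto.
  - intros E l. rewrite H. destruct (l =? i); auto. exists 0%nat; auto.
Qed.

Lemma wsum_map_mon phi (h : monom -> monom) q :
  wsum phi (map (fun t => (fst t, h (snd t))) q) = wsum (fun a => phi (h a)) q.
Proof. induction q; simpl; auto. rewrite IHq; auto. Qed.

Lemma supp_homog n k yi q : in_vars n q -> (n <= yi)%nat ->
  (forall a, coef q a <> 0 -> (mdeg a <= k)%nat) -> supp (hmon false (S yi) k) (homog k yi q).
Proof.
  intros Hv Hn Hd a Ha. match goal with |- ?G => destruct (classic G) as [|Hn']; auto end.
  exfalso. apply Ha. unfold homog. rewrite coef_wsum, (wsum_map_mon _ (fun b => madd b (munit yi (k - mdeg b)))). apply wsum_vanish.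
  - apply (meq_compat_comp (fun b => if meq a b then 1 else 0)); [apply indicator_meq_compat|].
    intros b b' E. rewrite (mdeg_meq _ _ E). apply madd_meq_l; auto.
  - intros b Hb. destruct (meq a (madd b (munit yi (k - mdeg b)))) eqn:E; auto.
    exfalso; apply Hn'. rewrite meq_spec in E. split; [|split].
    + intros i Hi. rewrite E, mexp_madd, mexp_munit, (Hv b Hb i) by lia.
      destruct (Nat.eqb_spec i yi); lia.
    + rewrite (mdeg_meq _ _ (proj2 (meq_spec _ _) E)). rewrite mdeg_madd, mdeg_munit.
      specialize (Hd b Hb); lia.
    + discriminate.
Qed.

Lemma deg_fold_ge P (l : mpoly) (t : R * monom) : In t l -> coef P (snd t) <> 0 ->
  (mdeg (snd t) <= fold_right (fun (t : R * monom) acc =>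
     if Req_EM_T (coef P (snd t)) 0 then acc else Nat.max (mdeg (snd t)) acc) 0%nat l)%nat.
Proof.
  induction l; simpl; [tauto|]. intros [->|H] Hc.
  - destruct (Req_EM_T (coef P (snd t)) 0); [contradiction|lia].
  - specialize (IHl H Hc). destruct (Req_EM_T (coef P (snd a)) 0); lia.
Qed.

Lemma coef_nonzero_in P a : coef P a <> 0 -> exists t, In t P /\ meq a (snd t) = true.
Proof.
  induction P; simpl. - unfold coef; simpl; lra.
  - unfold coef; simpl. destruct (meq a (snd a0)) eqn:E.
    + intros _; exists a0; auto.
    + intros H. destruct IHP as (t & H1 & H2); auto. exists t; auto.
Qed.

Lemma mdeg_le_deg P a : coef P a <> 0 -> (mdeg a <= deg P)%nat.
Proof.
  intros H. destruct (coef_nonzero_in P a H) as (t & Ht & E).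
  rewrite (mdeg_meq _ _ E). apply deg_fold_ge; auto.
  rewrite <- (coef_meq_compat P a (snd t) E); auto.
Qed.

Lemma peval_homog_y1 k yi q x : x yi = 1 -> peval (homog k yi q) x = peval q x.
Proof.
  intros H. unfold homog. rewrite !peval_wsum, (wsum_map_mon _ (fun b => madd b (munit yi (k - mdeg b)))). apply wsum_ext; intros a.
  rewrite meval_madd, meval_munit, H, pow1; lra.
Qed.

Lemma peval_in_vars n P x x' : in_vars n P -> (forall i, (i < n)%nat -> x i = x' i) ->
  peval P x = peval P x'.
Proof.
  intros Hv Hx. rewrite !peval_wsum. apply wsum_ext_supp; try apply meval_meq_compat.
  intros a Ha. rewrite !(meval_seq a _ (length a)) by lia. apply prodR_ext.
  intros i _. destruct (lt_dec i n). - rewrite Hx; auto.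
  - rewrite (Hv a Ha i) by lia. auto.
Qed.

Lemma prodR_scal_pow l t e : prodR l (fun i => t ^ e i) = t ^ (sumN l e).
Proof. unfold prodR, sumN; induction l; simpl; auto. rewrite IHl, pow_add; auto. Qed.

Lemma meval_scale a t x : meval a (fun i => t * x i) = t ^ mdeg a * meval a x.
Proof.
  rewrite !(meval_seq a _ (length a)), (mdeg_seq a (length a)) by lia.
  rewrite <- prodR_scal_pow, <- prodR_mult. apply prodR_ext; intros; apply Rpow_mult_distr.
Qed.

Lemma peval_hmon_scale ev n k P t x : supp (hmon ev n k) P ->
  peval P (fun i => t * x i) = t ^ k * peval P x.
Proof.
  intros H. rewrite !peval_wsum. rewrite <- wsum_scal. apply wsum_ext_supp.
  - apply meval_meq_compat.
  - intros a b E. rewrite (meval_meq a b x E); auto.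
  - intros a Ha. rewrite meval_scale. destruct (H a Ha) as (_ & -> & _); auto.
Qed.

Lemma prodR_nonneg l f : (forall i, In i l -> 0 <= f i) -> 0 <= prodR l f.
Proof. unfold prodR; induction l; simpl; intros; [lra|]. apply Rmult_le_pos; auto. Qed.

Lemma peval_nonneg P x : nonneg_coefs P -> (forall i, 0 <= x i) -> 0 <= peval P x.
Proof.
  intros H Hx. rewrite peval_wsum. apply wsum_nonneg; [apply meval_meq_compat|].
  intros a. apply Rmult_le_pos; [apply H|]. unfold meval.
  apply prodR_nonneg. intros; apply pow_le; auto.
Qed.

(** * Pólya's theorem for even forms *)

Definition falling (n k : nat) : R := prodR (seq 0 k) (fun l => INR n - INR l).

Lemma falling_S n k : falling n (S k) = falling n k * (INR n - INR k).
Proof. unfold falling. rewrite seq_S, prodR_app. simpl. lra. Qed.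

Lemma falling_id n k : (1 <= n)%nat -> falling n k * (INR n - INR k) = INR n * falling (n - 1) k.
Proof.
  intros Hn. induction k.
  - unfold falling; simpl; lra.
  - rewrite falling_S, falling_S. rewrite <- Rmult_assoc, <- IHk. rewrite minus_INR by lia.
    rewrite S_INR. simpl. lra.
Qed.

Lemma prodR_zero l f j : In j l -> f j = 0 -> prodR l f = 0.
Proof. unfold prodR; induction l; simpl; [tauto|]. intros [->|H] E. - rewrite E; lra.
  - rewrite IHl; auto; lra. Qed.

Lemma falling_big n k : (n < k)%nat -> falling n k = 0.
Proof. intros H. unfold falling. apply (prodR_zero _ _ n). - apply in_seq; lia. - lra. Qed.

Lemma falling_fact n : falling n n = INR (fact n).
Proof.
  induction n. - unfold falling; simpl; auto.
  - rewrite falling_S. assert (H := falling_id (S n) n). replace (S n - 1)%nat with n in H by lia.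
    rewrite H by lia. rewrite IHn. rewrite fact_simpl, mult_INR. rewrite S_INR. lra.
Qed.

Lemma prodR_split L j f : (j < L)%nat ->
  prodR (seq 0 L) f = prodR (seq 0 j) f * f j * prodR (seq (S j) (L - S j)) f.
Proof.
  intros H. replace L with (j + (1 + (L - S j)))%nat at 1 by lia.
  rewrite seq_app, prodR_app. rewrite seq_app, prodR_app. simpl. rewrite Nat.add_1_r. lra.
Qed.

Lemma prodR_replace L j f f' : (j < L)%nat -> (forall i, i <> j -> f i = f' i) ->
  f' j * prodR (seq 0 L) f = f j * prodR (seq 0 L) f'.
Proof.
  intros Hj H. rewrite !(prodR_split L j) by auto.
  rewrite (prodR_ext (seq 0 j) f f'), (prodR_ext (seq (S j) _) f f').
  - lra.
  - intros i Hi; apply in_seq in Hi; apply H; lia.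
  - intros i Hi; apply in_seq in Hi; apply H; lia.
Qed.

Lemma wsum_sumR (F : nat -> monom -> R) l P :
  wsum (fun c => sumR l (fun j => F j c)) P = sumR l (fun j => wsum (F j) P).
Proof.
  induction l; simpl. - apply wsum_zero.
  - rewrite wsum_plus, IHl. auto.
Qed.

Lemma sumR_plus l f g : sumR l (fun i => f i + g i) = sumR l f + sumR l g.
Proof. unfold sumR; induction l; simpl; [lra|]. rewrite IHl; lra. Qed.
Lemma sumR_scal l c f : sumR l (fun i => c * f i) = c * sumR l f.
Proof. unfold sumR; induction l; simpl; [lra|]. rewrite IHl; lra. Qed.
Lemma sumR_INR l f : sumR l (fun i => INR (f i)) = INR (sumN l f).
Proof. unfold sumR, sumN; induction l; simpl; auto. rewrite IHl, plus_INR; auto. Qed.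
Lemma sumR_zero l f : (forall i, In i l -> f i = 0) -> sumR l f = 0.
Proof. unfold sumR; induction l; simpl; intros; auto. rewrite H, IHl; auto; lra. Qed.

Lemma sumR_nonneg l f : (forall i, In i l -> 0 <= f i) -> 0 <= sumR l f.
Proof. unfold sumR; induction l; simpl; intros H; [lra|]. apply Rplus_le_le_0_compat; auto. Qed.

Lemma sumR_sq_nonneg l z : 0 <= sumR l (fun i => z i ^ 2).
Proof. induction l; [unfold sumR; simpl; lra|].
  change (sumR (a :: l) (fun i => z i ^ 2)) with (z a ^ 2 + sumR l (fun i => z i ^ 2)).
  pose proof (pow2_ge_0 (z a)); lra. Qed.

Lemma sumR_sq_zero l z : sumR l (fun i => z i ^ 2) = 0 -> forall i, In i l -> z i = 0.
Proof.
  induction l; [simpl; tauto|]. intros H i Hi.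
  change (sumR (a :: l) (fun i => z i ^ 2)) with (z a ^ 2 + sumR l (fun i => z i ^ 2)) in H.
  pose proof (pow2_ge_0 (z a)). pose proof (sumR_sq_nonneg l z).
  destruct Hi as [<-|Hi].
  - assert (z a ^ 2 = 0) by lra. nra.
  - apply IHl; auto. lra.
Qed.

Lemma sq_le1 x : x ^ 2 <= 1 -> Rabs x <= 1.
Proof. intros H. unfold Rabs; destruct (Rcase_abs x); nra. Qed.

Lemma term_le_sumR l z j : In j l -> z j ^ 2 <= sumR l (fun i => z i ^ 2).
Proof.
  induction l; [simpl; tauto|]. intros [<-|Hj];
  change (sumR (a :: l) (fun i => z i ^ 2)) with (z a ^ 2 + sumR l (fun i => z i ^ 2)).
  - pose proof (sumR_sq_nonneg l z); lra.
  - pose proof (pow2_ge_0 (z a)); specialize (IHl Hj); lra.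
Qed.

Definition mon_sub2 (b : monom) (j : nat) : monom :=
  map (fun i => (mexp b i - if Nat.eqb i j then 2 else 0)%nat) (seq 0 (length b)).

Lemma nth_map_seq (f : nat -> nat) L i : (i < L)%nat -> nth i (map f (seq 0 L)) 0%nat = f i.
Proof. intros H. rewrite (nth_indep _ 0%nat (f 0%nat)) by (rewrite length_map, length_seq; auto).
  rewrite map_nth, seq_nth; auto. Qed.

Lemma mexp_mon_sub2 b j i : mexp (mon_sub2 b j) i = (mexp b i - if Nat.eqb i j then 2 else 0)%nat.
Proof.
  unfold mon_sub2. unfold mexp at 1. destruct (lt_dec i (length b)).
  - rewrite nth_map_seq; auto.
  - rewrite nth_overflow by (rewrite length_map, length_seq; lia). rewrite mexp_overflow by lia. lia.
Qed.

Definition half_exp (b : monom) (j : nat) : nat := Nat.div2 (mexp b j).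

Definition polya_weight (L : nat) (b c : monom) : R := prodR (seq 0 L) (fun j => falling (half_exp b j) (half_exp c j)).

Definition polya_scale (L K : nat) (b : monom) : R :=
  INR (fact K) / prodR (seq 0 L) (fun j => INR (fact (half_exp b j))).

Lemma polya_weight_meq_compat L b : meq_compat (polya_weight L b).
Proof. intros c c' E. rewrite meq_spec in E. unfold polya_weight, half_exp. apply prodR_ext. intros; rewrite E; auto. Qed.

Lemma even_div2 k : Nat.Even k -> k = (2 * Nat.div2 k)%nat.
Proof. intros [u ->]. rewrite Nat.div2_double. auto. Qed.

Lemma sum_half_exp L k c : hmon true L (2 * k) c -> sumN (seq 0 L) (half_exp c) = k.
Proof.
  intros (H1 & H2 & H3). rewrite (mdeg_seq c (Nat.max L (length c))) in H2 by lia.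
  rewrite (seq_split L (Nat.max L (length c))) in H2 by lia. rewrite sumN_app in H2.
  rewrite (sumN_zero (seq L _)) in H2.
  2:{ intros i Hi; apply in_seq in Hi; apply H1; lia. }
  assert (E : sumN (seq 0 L) (mexp c) = (2 * sumN (seq 0 L) (half_exp c))%nat).
  { clear H2. unfold sumN, half_exp. induction (seq 0 L); simpl; auto. rewrite IHl.
    rewrite (even_div2 (mexp c a)) at 1 by (apply H3; auto). lia. }
  lia.
Qed.

Lemma prodR_pos l f : (forall i, In i l -> 0 < f i) -> 0 < prodR l f.
Proof. unfold prodR; induction l; simpl; intros; [lra|]. apply Rmult_lt_0_compat; auto. Qed.

Lemma fact_pos_R n : 0 < INR (fact n).
Proof. apply lt_0_INR, lt_O_fact. Qed.

Lemma polya_scale_pos L K b : 0 < polya_scale L K b.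
Proof. unfold polya_scale. apply Rdiv_lt_0_compat; [apply fact_pos_R|]. apply prodR_pos; intros; apply fact_pos_R. Qed.

(* [T] multiplies coefficients like [sum_(j<L) X_j^2] does. *)
Definition is_sqsum (L : nat) (T : mpoly) : Prop := forall X b,
  coef (pmul T X) b = sumR (seq 0 L) (fun j => if Nat.leb 2 (mexp b j) then coef X (mon_sub2 b j) else 0).

Lemma madd_nil_r s : madd s [] = s.
Proof. destruct s; auto. Qed.

Lemma coef_pmul_one P a : coef (pmul P (pconst 1)) a = coef P a.
Proof.
  rewrite !coef_wsum, wsum_pmul. apply wsum_ext. intros s. unfold pconst; simpl. rewrite madd_nil_r. lra.
Qed.

Lemma sumN_mono l f g : (forall j, In j l -> (f j <= g j)%nat) -> (sumN l f <= sumN l g)%nat.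
Proof. unfold sumN; induction l; simpl; intros H; auto.
  assert (f a <= g a)%nat by auto. assert (forall j, In j l -> (f j <= g j)%nat) by auto.
  specialize (IHl H1). lia. Qed.

Lemma sumN_le_eq l f g : (forall j, In j l -> (f j <= g j)%nat) -> sumN l f = sumN l g ->
  forall j, In j l -> f j = g j.
Proof.
  induction l; simpl; [tauto|]. intros H E.
  assert (Ha : (f a <= g a)%nat) by auto.
  assert (Hl : forall j, In j l -> (f j <= g j)%nat) by auto.
  pose proof (sumN_mono l f g Hl). unfold sumN in E, H0; simpl in E.
  intros j [<-|Hj]. - lia.
  - apply IHl; auto. unfold sumN. lia.
Qed.

Lemma falling_pos n k : (k <= n)%nat -> 0 < falling n k.
Proof. intros H. unfold falling. apply prodR_pos. intros l Hl; apply in_seq in Hl.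
  assert (INR l < INR n) by (apply lt_INR; lia). lra. Qed.

Lemma div2_sub2 x : Nat.div2 (x - 2) = (Nat.div2 x - 1)%nat.
Proof. destruct x as [|[|x]]; simpl; auto. rewrite !Nat.sub_0_r; auto. Qed.

Lemma half_exp_mon_sub2 b j i : half_exp (mon_sub2 b j) i = (half_exp b i - if Nat.eqb i j then 1 else 0)%nat.
Proof. unfold half_exp; rewrite mexp_mon_sub2. destruct (i =? j). - apply div2_sub2. - rewrite !Nat.sub_0_r; auto. Qed.

Lemma wsum_polya_weight_base L Dh G b : supp (hmon true L (2*Dh)) G -> hmon true L (2*(0+Dh)) b ->
  wsum (polya_weight L b) G = prodR (seq 0 L) (fun j => INR (fact (half_exp b j))) * coef G b.
Proof.
  intros HG Hb. rewrite coef_wsum, <- wsum_scal. apply wsum_ext_supp; [apply polya_weight_meq_compat| |].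
  - intros c c' E. rewrite (indicator_meq_compat b c c' E); auto.
  - intros c Hc. specialize (HG c Hc). replace (0 + Dh)%nat with Dh in Hb by lia.
    destruct (meq b c) eqn:E.
    + rewrite Rmult_1_r. unfold polya_weight. apply prodR_ext. intros j _. rewrite meq_spec in E.
      unfold half_exp; rewrite E. apply falling_fact.
    + rewrite Rmult_0_r. destruct (classic (exists j, (j < L)%nat /\ (half_exp b j < half_exp c j)%nat)) as [(j & Hj & Hl)|Hn].
      * unfold polya_weight. apply (prodR_zero _ _ j). apply in_seq; lia. apply falling_big; auto.
      * exfalso. assert (Heq : forall j, In j (seq 0 L) -> half_exp c j = half_exp b j).
        { apply sumN_le_eq. - intros j Hj; apply in_seq in Hj.
            destruct (le_lt_dec (half_exp c j) (half_exp b j)); auto. exfalso; apply Hn; exists j; split; auto; lia.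
          - rewrite (sum_half_exp L Dh c HG), (sum_half_exp L Dh b Hb); auto. }
        assert (meq b c = true); [|congruence]. apply meq_spec. intros i.
        destruct (lt_dec i L).
        -- destruct Hb as (_ & _ & Eb), HG as (_ & _ & Ec).
           rewrite (even_div2 (mexp b i)), (even_div2 (mexp c i)) by auto.
           fold (half_exp b i) (half_exp c i). rewrite Heq; auto. apply in_seq; lia.
        -- destruct Hb as (Eb & _), HG as (Ec & _). rewrite Eb, Ec; auto; lia.
Qed.

Lemma polya_weight_step L b c j : (j < L)%nat ->
  INR (half_exp b j) * polya_weight L (mon_sub2 b j) c = (INR (half_exp b j) - INR (half_exp c j)) * polya_weight L b c.
Proof.
  intros Hj. unfold polya_weight.
  set (f := fun i => falling (half_exp b i) (half_exp c i)).
  set (f' := fun i => falling (half_exp (mon_sub2 b j) i) (half_exp c i)).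
  assert (Hr : f' j * prodR (seq 0 L) f = f j * prodR (seq 0 L) f').
  { apply prodR_replace; auto. intros i Hi. unfold f, f'. rewrite half_exp_mon_sub2.
    destruct (Nat.eqb_spec i j); [lia|]. rewrite Nat.sub_0_r; auto. }
  change (INR (half_exp b j) * prodR (seq 0 L) f' = (INR (half_exp b j) - INR (half_exp c j)) * prodR (seq 0 L) f).
  assert (Hf'j : f' j = falling (half_exp b j - 1) (half_exp c j)).
  { unfold f'. rewrite half_exp_mon_sub2, Nat.eqb_refl; auto. }
  destruct (Nat.eq_dec (half_exp b j) 0) as [E0|E0].
  - rewrite E0. simpl INR. destruct (Nat.eq_dec (half_exp c j) 0) as [F0|F0].
    + rewrite F0; simpl; lra.
    + rewrite (prodR_zero _ f j); [lra|apply in_seq; lia|]. unfold f; rewrite E0; apply falling_big; lia.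
  - destruct (le_lt_dec (half_exp c j) (half_exp b j)) as [Hle|Hlt].
    + assert (Hpos : 0 < f j) by (unfold f; apply falling_pos; auto).
      assert (Hid := falling_id (half_exp b j) (half_exp c j) ltac:(lia)).
      apply (Rmult_eq_reg_l (f j)); [|lra].
      change (falling (half_exp b j) (half_exp c j)) with (f j) in Hid. rewrite <- Hf'j in Hid.
      transitivity (INR (half_exp b j) * (f j * prodR (seq 0 L) f')); [ring|].
      rewrite <- Hr. transitivity ((f j * (INR (half_exp b j) - INR (half_exp c j))) * prodR (seq 0 L) f);
      [rewrite Hid; ring|ring].
    + rewrite (prodR_zero _ f j); [|apply in_seq; lia|unfold f; apply falling_big; lia].
      rewrite (prodR_zero _ f' j); [lra|apply in_seq; lia|]. rewrite Hf'j; apply falling_big; lia.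
Qed.

Lemma polya_weight_sum L K Dh b c : hmon true L (2*(S K + Dh)) b -> hmon true L (2*Dh) c ->
  sumR (seq 0 L) (fun j => INR (half_exp b j) * polya_weight L (mon_sub2 b j) c) = INR (S K) * polya_weight L b c.
Proof.
  intros Hb Hc. rewrite (sumR_ext _ _ (fun j => INR (half_exp b j) * polya_weight L b c + (-1) * (INR (half_exp c j) * polya_weight L b c))).
  2:{ intros j Hj; apply in_seq in Hj. rewrite polya_weight_step by lia. lra. }
  rewrite sumR_plus, sumR_scal. rewrite (sumR_ext _ _ (fun j => polya_weight L b c * INR (half_exp b j))) by (intros; lra).
  rewrite (sumR_ext _ (fun j => INR (half_exp c j) * polya_weight L b c) (fun j => polya_weight L b c * INR (half_exp c j))) by (intros; lra).
  rewrite !sumR_scal, !sumR_INR. rewrite (sum_half_exp L _ b Hb), (sum_half_exp L _ c Hc).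
  rewrite plus_INR, S_INR. lra.
Qed.

Lemma polya_scale_step L K b j : (j < L)%nat -> (1 <= half_exp b j)%nat ->
  polya_scale L K (mon_sub2 b j) * INR (S K) = polya_scale L (S K) b * INR (half_exp b j).
Proof.
  intros Hj Hb. unfold polya_scale.
  set (P' := prodR (seq 0 L) (fun i => INR (fact (half_exp (mon_sub2 b j) i)))).
  set (P := prodR (seq 0 L) (fun i => INR (fact (half_exp b i)))).
  assert (HP' : 0 < P') by (apply prodR_pos; intros; apply fact_pos_R).
  assert (HP : 0 < P) by (apply prodR_pos; intros; apply fact_pos_R).
  assert (Hr : INR (fact (half_exp b j)) * P' = INR (fact (half_exp (mon_sub2 b j) j)) * P).
  { unfold P, P'. apply (prodR_replace L j (fun i => INR (fact (half_exp (mon_sub2 b j) i))) (fun i => INR (fact (half_exp b i)))); auto.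
    intros i Hi. rewrite half_exp_mon_sub2. destruct (Nat.eqb_spec i j); [lia|].
    rewrite Nat.sub_0_r; auto. }
  rewrite half_exp_mon_sub2, Nat.eqb_refl in Hr.
  replace (half_exp b j) with (S (half_exp b j - 1)) in Hr at 1 by lia.
  rewrite fact_simpl, mult_INR in Hr.
  assert (Hf := fact_pos_R (half_exp b j - 1)).
  assert (E : INR (S (half_exp b j - 1)) * P' = P).
  { apply (Rmult_eq_reg_l (INR (fact (half_exp b j - 1)))); [|lra]. rewrite <- Hr. ring. }
  replace (S (half_exp b j - 1)) with (half_exp b j) in E by lia.
  rewrite fact_simpl, mult_INR. rewrite <- E. field. split; [lra|].
  assert (0 < INR (half_exp b j)) by (apply lt_0_INR; lia). lra.
Qed.

Lemma mexp_mon_sub2_decomp b j i : (2 <= mexp b j)%nat ->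
  mexp b i = (mexp (mon_sub2 b j) i + mexp (munit j 2) i)%nat.
Proof. intros H. rewrite mexp_mon_sub2, mexp_munit. destruct (Nat.eqb_spec i j); subst; lia. Qed.

Lemma hmon_mon_sub2 L K Dh b j : (j < L)%nat -> (2 <= mexp b j)%nat ->
  hmon true L (2*(S K + Dh)) b -> hmon true L (2*(K + Dh)) (mon_sub2 b j).
Proof.
  intros Hj H2 (H1 & Hd & He). split; [|split].
  - intros i Hi. rewrite mexp_mon_sub2, H1; auto.
  - pose proof (mdeg_sum b (mon_sub2 b j) (munit j 2) (fun i => mexp_mon_sub2_decomp b j i H2)). rewrite mdeg_munit in H. lia.
  - intros E i. rewrite mexp_mon_sub2. destruct (He E i) as [u Hu]. destruct (i =? j).
    + exists (u - 1)%nat. lia.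
    + exists u; lia.
Qed.

Lemma hmon_mon_sub2_inv L K Dh b j : (j < L)%nat -> (2 <= mexp b j)%nat ->
  hmon true L (2*(K + Dh)) (mon_sub2 b j) -> hmon true L (2*(S K + Dh)) b.
Proof.
  intros Hj H2 (H1 & Hd & He). pose proof (fun i => mexp_mon_sub2_decomp b j i H2) as Hdc. split; [|split].
  - intros i Hi. rewrite Hdc, H1, mexp_munit by auto. destruct (Nat.eqb_spec i j); lia.
  - pose proof (mdeg_sum b (mon_sub2 b j) (munit j 2) Hdc). rewrite mdeg_munit in H. lia.
  - intros E i. rewrite Hdc, mexp_munit. destruct (He E i) as [u Hu]. destruct (i =? j).
    + exists (S u). lia.
    + exists u; lia.
Qed.

Lemma half_exp_ge1 b j : (2 <= mexp b j)%nat -> (1 <= half_exp b j)%nat.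
Proof. unfold half_exp. destruct (mexp b j) as [|[|x]]; simpl; [lia|lia|]. intros _. apply le_n_S, Nat.le_0_l. Qed.

Lemma half_exp_0 b j : (mexp b j < 2)%nat -> half_exp b j = 0%nat.
Proof. unfold half_exp. destruct (mexp b j) as [|[|x]]; intros H; [auto|auto|lia]. Qed.

(* Summing the weights of the [b - 2 e_j] against [half_exp b j] reproduces [(K+1)] times the
   weight of [b]: the multinomial recursion behind Pólya's formula. *)
Lemma polya_sum_step L K Dh G b : supp (hmon true L (2*Dh)) G -> hmon true L (2*(S K+Dh)) b ->
  sumR (seq 0 L) (fun j => if Nat.leb 2 (mexp b j)
                            then polya_scale L K (mon_sub2 b j) * wsum (polya_weight L (mon_sub2 b j)) G else 0)
  = polya_scale L (S K) b * wsum (polya_weight L b) G.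
Proof.
  intros HG Hb. assert (HSK : 0 < INR (S K)) by (apply lt_0_INR; lia).
  rewrite (sumR_ext _ _ (fun j => (polya_scale L (S K) b / INR (S K)) *
                                  (INR (half_exp b j) * wsum (polya_weight L (mon_sub2 b j)) G))).
  2:{ intros j Hj. apply in_seq in Hj. destruct (Nat.leb_spec 2 (mexp b j)) as [H2|H2].
      - assert (Hk := polya_scale_step L K b j ltac:(lia) (half_exp_ge1 b j H2)).
        apply (Rmult_eq_reg_r (INR (S K))); [|lra].
        transitivity (polya_scale L K (mon_sub2 b j) * INR (S K) * wsum (polya_weight L (mon_sub2 b j)) G); [ring|].
        rewrite Hk. field. lra.
      - rewrite (half_exp_0 b j H2). simpl INR. lra. }
  rewrite sumR_scal.
  rewrite (sumR_ext _ _ (fun j => wsum (fun c => INR (half_exp b j) * polya_weight L (mon_sub2 b j) c) G))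
    by (intros; rewrite wsum_scal; auto).
  rewrite <- wsum_sumR.
  rewrite (wsum_ext_supp _ (fun c => INR (S K) * polya_weight L b c)).
  - rewrite wsum_scal. field. lra.
  - intros c c' E. apply sumR_ext. intros j _. rewrite (polya_weight_meq_compat L (mon_sub2 b j) c c' E); auto.
  - intros c c' E. rewrite (polya_weight_meq_compat L b c c' E); auto.
  - intros c Hc. apply (polya_weight_sum L K Dh); auto.
Qed.

Lemma coef_pmul_ppow_S G T K b : coef (pmul G (ppow T (S K))) b = coef (pmul T (pmul G (ppow T K))) b.
Proof.
  cbn [ppow]. rewrite <- coef_pmul_assoc.
  rewrite (coef_pmul_l _ (pmul T G)) by (intros; apply coef_pmul_comm).
  apply coef_pmul_assoc.
Qed.

(* Pólya's formula: with [T = sum_j X_j^2], the coefficient of [X^b] in [G T^K] is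
   [K! / prod_j (b_j/2)!] times [sum_c G_c prod_j (b_j/2)(b_j/2 - 1)...(b_j/2 - c_j/2 + 1)]. *)
Lemma coef_polya_product L Dh G T : supp (hmon true L (2*Dh)) G -> is_sqsum L T -> forall K b,
  (hmon true L (2*(K+Dh)) b -> coef (pmul G (ppow T K)) b = polya_scale L K b * wsum (polya_weight L b) G) /\
  (~ hmon true L (2*(K+Dh)) b -> coef (pmul G (ppow T K)) b = 0).
Proof.
  intros HG HT K. induction K as [|K IH]; intros b.
  - cbn [ppow]. rewrite coef_pmul_one. split.
    + intros Hb. rewrite (wsum_polya_weight_base L Dh G b HG Hb). unfold polya_scale. simpl fact. simpl INR.
      field. apply Rgt_not_eq, prodR_pos; intros; apply fact_pos_R.
    + intros Hb. destruct (Req_dec (coef G b) 0); auto. exfalso; apply Hb.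
      replace (0 + Dh)%nat with Dh by lia. apply HG; auto.
  - rewrite coef_pmul_ppow_S, HT. split.
    + intros Hb. rewrite <- (polya_sum_step L K Dh G b HG Hb). apply sumR_ext. intros j Hj. apply in_seq in Hj.
      destruct (Nat.leb_spec 2 (mexp b j)) as [H2|H2]; auto.
      apply (proj1 (IH (mon_sub2 b j))), (hmon_mon_sub2 L K Dh b j); auto; lia.
    + intros Hb. apply sumR_zero. intros j Hj. apply in_seq in Hj.
      destruct (Nat.leb_spec 2 (mexp b j)) as [H2|H2]; auto.
      apply (proj2 (IH (mon_sub2 b j))). intro Hg. apply Hb. apply (hmon_mon_sub2_inv L K Dh b j); auto; lia.
Qed.

Lemma prodR_abs_le1 l f : (forall i, In i l -> Rabs (f i) <= 1) -> Rabs (prodR l f) <= 1.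
Proof.
  unfold prodR; induction l; simpl; intros H. - rewrite Rabs_R1; lra.
  - rewrite Rabs_mult. assert (Rabs (f a) <= 1) by auto.
    assert (Rabs (fold_right (fun i acc => f i * acc) 1 l) <= 1) by auto.
    pose proof (Rabs_pos (f a)). pose proof (Rabs_pos (fold_right (fun i acc => f i * acc) 1 l)). nra.
Qed.

Lemma prodR_diff_le l f g : (forall i, In i l -> Rabs (f i) <= 1 /\ Rabs (g i) <= 1) ->
  Rabs (prodR l f - prodR l g) <= sumR l (fun i => Rabs (f i - g i)).
Proof.
  induction l; simpl; intros H. - unfold prodR; simpl. rewrite Rminus_diag, Rabs_R0. unfold sumR; simpl; lra.
  - unfold prodR in *; unfold sumR in *; simpl.
    replace (f a * fold_right (fun i acc => f i * acc) 1 l - g a * fold_right (fun i acc => g i * acc) 1 l)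
      with ((f a - g a) * fold_right (fun i acc => f i * acc) 1 l +
             g a * (fold_right (fun i acc => f i * acc) 1 l - fold_right (fun i acc => g i * acc) 1 l)) by ring.
    eapply Rle_trans; [apply Rabs_triang|]. rewrite !Rabs_mult.
    assert (H1 : Rabs (fold_right (fun i acc => f i * acc) 1 l) <= 1).
    { apply (prodR_abs_le1 l f). intros; apply H; auto. }
    assert (H2 : Rabs (g a) <= 1) by (apply H; auto).
    assert (H3 := IHl (fun i Hi => H i (or_intror Hi))).
    pose proof (Rabs_pos (f a - g a)). pose proof (Rabs_pos (g a)).
    pose proof (Rabs_pos (fold_right (fun i acc => f i * acc) 1 l - fold_right (fun i acc => g i * acc) 1 l)).
    pose proof (Rabs_pos (fold_right (fun i acc => f i * acc) 1 l)). nra.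
Qed.

Lemma prodR_const_scal l c f : prodR l (fun i => c * f i) = c ^ length l * prodR l f.
Proof. unfold prodR; induction l; simpl; [lra|]. rewrite IHl; ring. Qed.

Lemma pow_prodR x k : x ^ k = prodR (seq 0 k) (fun _ => x).
Proof. induction k. - unfold prodR; simpl; auto. - rewrite seq_S, prodR_app, <- IHk. unfold prodR; simpl. ring. Qed.

Lemma sumN_ge_term l f j : In j l -> (f j <= sumN l f)%nat.
Proof. unfold sumN; induction l; simpl; [tauto|]. intros [->|H]; [lia|]. specialize (IHl H); lia. Qed.

Lemma sumR_le l f g : (forall i, In i l -> f i <= g i) -> sumR l f <= sumR l g.
Proof. unfold sumR; induction l; simpl; intros; [lra|]. assert (f a <= g a) by auto.
  assert (fold_right (fun i acc => f i + acc) 0 l <= fold_right (fun i acc => g i + acc) 0 l) by auto. lra. Qed.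

Lemma sumR_const l c : sumR l (fun _ => c) = INR (length l) * c.
Proof. unfold sumR; induction l; [simpl; lra|]. cbn [length fold_right]. rewrite IHl, S_INR; ring. Qed.

Definition simplex_point (L M : nat) (b : monom) (i : nat) : R :=
  if lt_dec i L then sqrt (INR (half_exp b i) / INR M) else 0.

Lemma polya_weight_scaled L Dh M b c : (1 <= M)%nat -> hmon true L (2*Dh) c ->
  polya_weight L b c =
  INR M ^ Dh * prodR (seq 0 L) (fun j => prodR (seq 0 (half_exp c j)) (fun l => (INR (half_exp b j) - INR l) / INR M)).
Proof.
  intros HM Hc. assert (HMp : 0 < INR M) by (apply lt_0_INR; lia).
  unfold polya_weight, falling.
  rewrite (prodR_ext _ _ (fun j => INR M ^ (half_exp c j) *
             prodR (seq 0 (half_exp c j)) (fun l => (INR (half_exp b j) - INR l) / INR M))).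
  - rewrite prodR_mult, prodR_scal_pow, (sum_half_exp L Dh c Hc). auto.
  - intros j _. replace (INR M ^ half_exp c j) with (INR M ^ length (seq 0 (half_exp c j))) by (rewrite length_seq; auto).
    rewrite <- prodR_const_scal. apply prodR_ext. intros l _. field. lra.
Qed.

Lemma meval_simplex_point L Dh M b c : (1 <= M)%nat -> hmon true L (2*Dh) c ->
  meval c (simplex_point L M b) =
  prodR (seq 0 L) (fun j => prodR (seq 0 (half_exp c j)) (fun _ => INR (half_exp b j) / INR M)).
Proof.
  intros HM (Hc1 & _ & Hc3). assert (HMp : 0 < INR M) by (apply lt_0_INR; lia).
  rewrite (meval_seq c _ (Nat.max L (length c))) by lia.
  rewrite (seq_split L (Nat.max L (length c))), prodR_app by lia.
  rewrite (prodR_one (seq L _)), Rmult_1_r.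
  2:{ intros i Hi; apply in_seq in Hi. rewrite Hc1 by lia. auto. }
  apply prodR_ext. intros j Hj. apply in_seq in Hj.
  rewrite (even_div2 (mexp c j)) by (apply Hc3; auto). fold (half_exp c j).
  unfold simplex_point. destruct (lt_dec j L); [|lia]. rewrite pow_mult, pow2_sqrt.
  - apply pow_prodR.
  - apply Rle_mult_inv_pos; [apply pos_INR|lra].
Qed.

Lemma Rabs_div_le1 x y : 0 < y -> Rabs x <= y -> Rabs (x / y) <= 1.
Proof.
  intros Hy Hx. unfold Rdiv. rewrite Rabs_mult, Rabs_inv, (Rabs_right y) by lra.
  apply (Rmult_le_reg_r y); auto. rewrite Rmult_assoc, Rinv_l, Rmult_1_r, Rmult_1_l by lra. auto.
Qed.

Lemma falling_ratio_abs_le1 a l M : (1 <= M)%nat -> (a <= M)%nat -> (l <= M)%nat ->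
  Rabs ((INR a - INR l) / INR M) <= 1 /\ Rabs (INR a / INR M) <= 1.
Proof.
  intros HM Ha Hl. assert (HMp : 0 < INR M) by (apply lt_0_INR; lia).
  assert (INR a <= INR M) by (apply le_INR; auto). assert (INR l <= INR M) by (apply le_INR; auto).
  pose proof (pos_INR a). pose proof (pos_INR l).
  split; apply Rabs_div_le1; auto; apply Rabs_le; lra.
Qed.

Lemma falling_ratio_approx a h Dh M : (1 <= M)%nat -> (a <= M)%nat -> (h <= Dh <= M)%nat ->
  Rabs (prodR (seq 0 h) (fun l => (INR a - INR l) / INR M) - prodR (seq 0 h) (fun _ => INR a / INR M))
  <= INR h * (INR Dh / INR M).
Proof.
  intros HM Ha Hh. assert (HMp : 0 < INR M) by (apply lt_0_INR; lia).
  eapply Rle_trans.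
  { apply prodR_diff_le. intros l Hl. apply in_seq in Hl. apply falling_ratio_abs_le1; lia. }
  replace (INR h) with (INR (length (seq 0 h))) by (rewrite length_seq; auto).
  rewrite <- sumR_const. apply sumR_le.
  intros l Hl. apply in_seq in Hl.
  replace ((INR a - INR l) / INR M - INR a / INR M) with (- (INR l / INR M)) by (field; lra).
  rewrite Rabs_Ropp, Rabs_right by (apply Rle_ge, Rle_mult_inv_pos; [apply pos_INR|lra]).
  apply Rmult_le_compat_r; [left; apply Rinv_0_lt_compat; lra|]. apply le_INR; lia.
Qed.

Lemma polya_weight_approx L Dh M b c : (1 <= M)%nat -> (Dh <= M)%nat ->
  hmon true L (2*M) b -> hmon true L (2*Dh) c ->
  Rabs (polya_weight L b c - INR M ^ Dh * meval c (simplex_point L M b)) <= INR Dh ^ 2 * INR M ^ Dh / INR M.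
Proof.
  intros HM HDM Hb Hc. assert (HMp : 0 < INR M) by (apply lt_0_INR; lia).
  rewrite (polya_weight_scaled L Dh M b c), (meval_simplex_point L Dh M b c) by auto.
  rewrite <- Rmult_minus_distr_l, Rabs_mult, Rabs_right by (apply Rle_ge, pow_le; lra).
  replace (INR Dh ^ 2 * INR M ^ Dh / INR M) with (INR M ^ Dh * (INR Dh / INR M * INR Dh)) by (field; lra).
  apply Rmult_le_compat_l; [apply pow_le; lra|].
  assert (Hbnd : forall j, In j (seq 0 L) -> (half_exp b j <= M)%nat /\ (half_exp c j <= Dh)%nat).
  { intros j Hj. rewrite <- (sum_half_exp L M b Hb), <- (sum_half_exp L Dh c Hc) at 1.
    split; apply sumN_ge_term; auto. }
  eapply Rle_trans.
  { apply prodR_diff_le. intros j Hj. destruct (Hbnd j Hj) as [Hbj Hcj].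
    split; apply prodR_abs_le1; intros l Hl; apply in_seq in Hl;
      apply (falling_ratio_abs_le1 (half_exp b j) l M); auto; lia. }
  eapply Rle_trans.
  { apply sumR_le. intros j Hj. destruct (Hbnd j Hj).
    apply (falling_ratio_approx (half_exp b j) (half_exp c j) Dh M); auto. }
  rewrite (sumR_ext _ _ (fun j => (INR Dh / INR M) * INR (half_exp c j))) by (intros; ring).
  rewrite sumR_scal, sumR_INR, (sum_half_exp L Dh c Hc). lra.
Qed.

Lemma hmon_meq ev n k a a' : meq a a' = true -> hmon ev n k a -> hmon ev n k a'.
Proof.
  intros E (H1 & H2 & H3). pose proof (mdeg_meq _ _ E). rewrite meq_spec in E.
  split; [|split].
  - intros i Hi; rewrite <- E; auto.
  - lia.
  - intros e i; rewrite <- E; auto.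
Qed.

(* By [coef_polya_product] the coefficients of [G T^K] have the sign of
   [sum_c G_c polya_weight b c], which is [M^Dh G(simplex_point b)] up to
   [Dh^2 M^Dh / M * coef_l1 G] by [polya_weight_approx]. *)
Lemma polya_nonneg_coefs L Dh G T K : (1 <= Dh)%nat -> supp (hmon true L (2*Dh)) G -> is_sqsum L T ->
  (forall b, hmon true L (2*(K+Dh)) b -> INR Dh ^ 2 * coef_l1 G / INR (K+Dh) <= peval G (simplex_point L (K+Dh) b)) ->
  nonneg_coefs (pmul G (ppow T K)).
Proof.
  intros HD HG HT Hv b. destruct (coef_polya_product L Dh G T HG HT K b) as [P1 P2].
  destruct (classic (hmon true L (2*(K+Dh)) b)) as [Hb|Hb]; [|rewrite P2; auto; lra].
  rewrite P1 by auto. apply Rmult_le_pos; [left; apply polya_scale_pos|].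
  set (M := (K + Dh)%nat). set (v := simplex_point L M b).
  assert (HM : 0 < INR M) by (apply lt_0_INR; unfold M; lia).
  set (psi := fun c => if excluded_middle_informative (hmon true L (2*Dh) c)
                       then polya_weight L b c - INR M ^ Dh * meval c v else 0).
  assert (EW : wsum (polya_weight L b) G = wsum (fun c => INR M ^ Dh * meval c v + psi c) G).
  { apply wsum_ext_supp.
    - apply polya_weight_meq_compat.
    - intros c c' E. unfold psi. rewrite (meval_meq c c' v E).
      destruct (excluded_middle_informative (hmon true L (2 * Dh) c)) as [F1|F1];
      destruct (excluded_middle_informative (hmon true L (2 * Dh) c')) as [F2|F2].
      + rewrite (polya_weight_meq_compat L b c c' E); auto.
      + exfalso; apply F2; eapply hmon_meq; eauto.
      + exfalso; apply F1; eapply hmon_meq; [rewrite meq_sym; eauto|]; auto.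
      + auto.
    - intros c Hc. unfold psi. destruct (excluded_middle_informative (hmon true L (2 * Dh) c)); [lra|].
      exfalso; auto. }
  rewrite EW, wsum_plus, wsum_scal. rewrite <- peval_wsum.
  assert (Hpsi : Rabs (wsum psi G) <= (INR Dh ^ 2 * INR M ^ Dh / INR M) * coef_l1 G).
  { apply wsum_abs_le. intros c. unfold psi. destruct (excluded_middle_informative (hmon true L (2 * Dh) c)).
    - apply polya_weight_approx; auto; unfold M; lia.
    - rewrite Rabs_R0. apply Rle_mult_inv_pos; [|auto]. apply Rmult_le_pos; [apply pow_le, pos_INR|apply pow_le; lra]. }
  specialize (Hv b Hb). fold M v in Hv.
  assert (HMD : 0 < INR M ^ Dh) by (apply pow_lt; lra).
  assert (Hab : - wsum psi G <= Rabs (wsum psi G)) by (rewrite <- Rabs_Ropp; apply Rle_abs).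
  replace (INR Dh ^ 2 * INR M ^ Dh / INR M * coef_l1 G) with (INR M ^ Dh * (INR Dh ^ 2 * coef_l1 G / INR M)) in Hpsi by (field; lra).
  nra.
Qed.

Lemma simplex_point_props L M b : (1 <= M)%nat -> hmon true L (2*M) b ->
  (forall i, 0 <= simplex_point L M b i) /\ (forall i, (L <= i)%nat -> simplex_point L M b i = 0) /\
  sumR (seq 0 L) (fun i => simplex_point L M b i ^ 2) = 1.
Proof.
  intros HM Hb. assert (HMp : 0 < INR M) by (apply lt_0_INR; lia). split; [|split].
  - intros i; unfold simplex_point; destruct (lt_dec i L); [apply sqrt_pos|lra].
  - intros i Hi; unfold simplex_point; destruct (lt_dec i L); [lia|auto].
  - rewrite (sumR_ext _ _ (fun i => / INR M * INR (half_exp b i))).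
    + rewrite sumR_scal, sumR_INR, (sum_half_exp L M b Hb). field; lra.
    + intros i Hi; apply in_seq in Hi. unfold simplex_point. destruct (lt_dec i L); [|lia].
      rewrite pow2_sqrt. field; lra. apply Rle_mult_inv_pos; [apply pos_INR|lra].
Qed.

(** * The certificates [Pol] *)

Lemma supp_hmon_deg_eq ev n k k' P : k = k' -> supp (hmon ev n k) P -> supp (hmon ev n k') P.
Proof. intros ->; auto. Qed.

Lemma pmul_app_l P1 P2 X : pmul (P1 ++ P2) X = pmul P1 X ++ pmul P2 X.
Proof. unfold pmul; apply flat_map_app. Qed.

Lemma sumR_shift s k f : sumR (seq s k) f = sumR (seq 0 k) (fun i => f (s + i)%nat).
Proof.
  revert s f; induction k; intros s f; [reflexivity|].
  change (sumR (seq s (S k)) f) with (f s + sumR (seq (S s) k) f).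
  change (sumR (seq 0 (S k)) (fun i => f (s + i)%nat)) with (f (s + 0)%nat + sumR (seq 1 k) (fun i => f (s + i)%nat)).
  rewrite IHk, (IHk 1%nat). rewrite Nat.add_0_r. f_equal. apply sumR_ext. intros; f_equal; lia.
Qed.

Lemma sumR_double n' f : sumR (seq 0 (2 * n')) f = sumR (seq 0 n') f + sumR (seq 0 n') (fun i => f (n' + i)%nat).
Proof. rewrite (seq_split n' (2*n')) by lia. rewrite sumR_app, (sumR_shift n'). replace (2*n' - n')%nat with n' by lia. reflexivity. Qed.

Lemma coef_pmul_psum l F X b : coef (pmul (psum l F) X) b = sumR l (fun j => coef (pmul (F j) X) b).
Proof.
  induction l; simpl. - unfold pmul; simpl. unfold coef; simpl. unfold sumR; simpl; auto.
  - unfold padd. rewrite pmul_app_l, coef_app, IHl. unfold sumR; simpl; auto.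
Qed.

Lemma wsum_sq j phi : wsum phi (ppow (pvar j) 2) = phi (madd (munit j 1) (madd (munit j 1) [])).
Proof. unfold ppow, pvar, pconst, pmul; simpl. lra. Qed.

Lemma coef_pmul_sq j X b : coef (pmul (ppow (pvar j) 2) X) b =
  if Nat.leb 2 (mexp b j) then coef X (mon_sub2 b j) else 0.
Proof.
  rewrite coef_wsum, wsum_pmul, wsum_sq. rewrite (coef_wsum X).
  destruct (Nat.leb_spec 2 (mexp b j)) as [H|H].
  - apply wsum_ext. intros t. destruct (meq b (madd (madd (munit j 1) (madd (munit j 1) [])) t)) eqn:E1;
    destruct (meq (mon_sub2 b j) t) eqn:E2; auto; exfalso.
    + rewrite meq_spec in E1.
      assert (meq (mon_sub2 b j) t = true); [|congruence]. apply meq_spec; intros i.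
      rewrite mexp_mon_sub2, E1, !mexp_madd, !mexp_munit, (mexp_overflow []) by (simpl; lia).
      destruct (i =? j); lia.
    + rewrite meq_spec in E2.
      assert (meq b (madd (madd (munit j 1) (madd (munit j 1) [])) t) = true); [|congruence].
      apply meq_spec; intros i. rewrite !mexp_madd, !mexp_munit, (mexp_overflow []) by (simpl; lia).
      rewrite <- E2, mexp_mon_sub2. destruct (Nat.eqb_spec i j); subst; lia.
  - transitivity (wsum (fun _ => 0) X); [|apply wsum_zero]. apply wsum_ext. intros t.
    destruct (meq b (madd (madd (munit j 1) (madd (munit j 1) [])) t)) eqn:E1; auto.
    rewrite meq_spec in E1. specialize (E1 j). rewrite !mexp_madd, !mexp_munit, Nat.eqb_refl in E1. lia.
Qed.

Definition vw_sqnorm (n' : nat) : mpoly :=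
  padd (psum (seq 0 n') (fun i => ppow (pvar i) 2)) (psum (seq 0 n') (fun i => ppow (pvar (n' + i)) 2)).

Lemma vw_sqnorm_is_sqsum n' : is_sqsum (2 * n') (vw_sqnorm n').
Proof.
  intros X b. unfold vw_sqnorm, padd. rewrite pmul_app_l, coef_app, !coef_pmul_psum.
  rewrite sumR_double. f_equal; apply sumR_ext; intros; apply coef_pmul_sq.
Qed.

Definition vw_sqdiff (n' : nat) (i : nat) : mpoly := psub (ppow (pvar i) 2) (ppow (pvar (n' + i)) 2).

Lemma coef_pmul_pconst1_l X a : coef (pmul (pconst 1) X) a = coef X a.
Proof. rewrite coef_pmul_comm. apply coef_pmul_one. Qed.

Definition mon_subst_list (sigma : nat -> mpoly) (a : monom) (l : list nat) (init : mpoly) : mpoly :=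
  fold_right (fun i acc => pmul (ppow (sigma i) (mexp a i)) acc) init l.

Lemma mon_subst_list_init sigma a l X Y : (forall b, coef X b = coef Y b) ->
  forall b, coef (mon_subst_list sigma a l X) b = coef (mon_subst_list sigma a l Y) b.
Proof. induction l; simpl; auto. intros H b. apply coef_pmul_r; auto. Qed.

Lemma mon_subst_list_zero sigma a l : (forall i, In i l -> mexp a i = 0%nat) ->
  forall b, coef (mon_subst_list sigma a l (pconst 1)) b = coef (pconst 1) b.
Proof.
  induction l; simpl; auto. intros H b. rewrite H by auto. cbn [ppow].
  rewrite coef_pmul_pconst1_l. apply IHl; auto.
Qed.

Lemma mon_subst_mon_subst_list sigma a L : (length a <= L)%nat ->
  forall b, coef (mon_subst sigma a) b = coef (mon_subst_list sigma a (seq 0 L) (pconst 1)) b.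
Proof.
  intros H b. unfold mon_subst. rewrite (seq_split (length a) L) by auto. unfold mon_subst_list.
  rewrite fold_right_app. fold (mon_subst_list sigma a (seq (length a) (L - length a)) (pconst 1)).
  fold (mon_subst_list sigma a (seq 0 (length a)) (mon_subst_list sigma a (seq (length a) (L - length a)) (pconst 1))).
  symmetry. apply mon_subst_list_init. apply mon_subst_list_zero. intros i Hi; apply in_seq in Hi; apply mexp_overflow; lia.
Qed.

Lemma mon_subst_list_ext sigma a a' l X : (forall i, In i l -> mexp a i = mexp a' i) -> mon_subst_list sigma a l X = mon_subst_list sigma a' l X.
Proof. induction l; simpl; intros H; auto. rewrite H, IHl; auto. Qed.

Lemma mon_subst_meq sigma a a' b : meq a a' = true -> coef (mon_subst sigma a) b = coef (mon_subst sigma a') b.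
Proof.
  intros E. set (L := Nat.max (length a) (length a')).
  rewrite (mon_subst_mon_subst_list sigma a L), (mon_subst_mon_subst_list sigma a' L) by (unfold L; lia).
  rewrite meq_spec in E. rewrite (mon_subst_list_ext sigma a a'); auto.
Qed.

Lemma wsum_pmul_pconst phi c X : wsum phi (pmul (pconst c) X) = c * wsum phi X.
Proof. rewrite wsum_pmul. unfold pconst; simpl. rewrite Rplus_0_r. f_equal. Qed.

Lemma wsum_psubst phi q sigma : wsum phi (psubst q sigma) = wsum (fun a => wsum phi (mon_subst sigma a)) q.
Proof.
  rewrite psubst_eq, wsum_flat_map. induction q as [|t q IH]; [reflexivity|]. cbn [fold_right].
  rewrite IH, wsum_pmul_pconst. reflexivity.
Qed.

Lemma supp_mon_subst_list sigma a l n' : (forall i, In i l -> supp (hmon true n' (mexp a i * 2)) (ppow (sigma i) (mexp a i))) ->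
  supp (hmon true n' (sumN l (mexp a) * 2)) (mon_subst_list sigma a l (pconst 1)).
Proof.
  induction l; simpl; intros H. - apply supp_pconst_hmon.
  - eapply supp_hmon_deg_eq; [|apply supp_pmul_hmon; [apply H; auto|apply IHl; auto]]. unfold sumN; simpl. lia.
Qed.

Lemma supp_sig n' i : (i < n')%nat -> supp (hmon true (2*n') 2) (vw_sqdiff n' i).
Proof.
  intros H. unfold vw_sqdiff. apply supp_psub; apply supp_pvarpow_hmon; try lia; intros _; exists 1%nat; lia.
Qed.

Lemma supp_mon_subst n' k a : hmon false n' k a -> supp (hmon true (2*n') (2*k)) (mon_subst (vw_sqdiff n') a).
Proof.
  intros (H1 & H2 & _) b Hb. rewrite (mon_subst_mon_subst_list _ a (length a)) in Hb by lia.
  revert b Hb. apply supp_hmon_deg_eq with (k := (sumN (seq 0 (length a)) (mexp a) * 2)%nat).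
  - rewrite <- (mdeg_seq a (length a)) by lia. lia.
  - apply supp_mon_subst_list. intros i _. destruct (lt_dec i n').
    + apply supp_ppow_hmon, supp_sig; auto.
    + rewrite H1 by lia. cbn [ppow]. apply supp_pconst_hmon.
Qed.

Lemma supp_psubst n' k q : supp (hmon false n' k) q -> supp (hmon true (2*n') (2*k)) (psubst q (vw_sqdiff n')).
Proof.
  intros Hq b Hb. destruct (classic (hmon true (2*n') (2*k) b)) as [|Hn]; auto. exfalso. apply Hb.
  rewrite coef_wsum, wsum_psubst. apply wsum_vanish.
  - intros a a' E. rewrite <- !coef_wsum. apply mon_subst_meq; auto.
  - intros a Ha. rewrite <- coef_wsum. destruct (Req_dec (coef (mon_subst (vw_sqdiff n') a) b) 0); auto.
    exfalso; apply Hn. apply (supp_mon_subst n' k a); auto.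
Qed.

Definition vw_quartic (n' d' : nat) : mpoly :=
  ppow (psum (seq 0 n') (fun i => padd (ppow (pvar i) 4) (ppow (pvar (n' + i)) 4))) d'.

Lemma supp_vw_quartic n' d' : supp (hmon true (2*n') (2*(2*d'))) (vw_quartic n' d').
Proof.
  unfold vw_quartic. eapply supp_hmon_deg_eq; [|apply (supp_ppow_hmon _ _ 4)]. lia.
  apply supp_psum. intros i Hi; apply in_seq in Hi. apply supp_padd; apply supp_pvarpow_hmon; try lia;
  intros _; exists 2%nat; lia.
Qed.

Definition pol_lhs (r n' d' : nat) (q : mpoly) : mpoly :=
  padd (psubst q (vw_sqdiff n')) (pscale (1 / (2 * INR r)) (vw_quartic n' d')).

Lemma Pol_unfold r n' d' q : Pol r n' d' q <->
  is_form n' (2 * d') q /\ nonneg_coefs (pmul (pol_lhs r n' d' q) (ppow (vw_sqnorm n') (r * r))).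
Proof. reflexivity. Qed.

Lemma supp_pol_lhs r n' d' q : supp (hmon false n' (2*d')) q -> supp (hmon true (2*n') (2*(2*d'))) (pol_lhs r n' d' q).
Proof. intros H. unfold pol_lhs. apply supp_padd. - apply supp_psubst; auto. - apply supp_pscale, supp_vw_quartic. Qed.

Lemma peval_pol_lhs r n' d' q v : peval (pol_lhs r n' d' q) v =
  peval q (fun i => v i ^ 2 - v (n' + i)%nat ^ 2) +
  1 / (2 * INR r) * (sumR (seq 0 n') (fun i => v i ^ 4 + v (n' + i)%nat ^ 4)) ^ d'.
Proof.
  unfold pol_lhs, padd. rewrite peval_app, peval_pscale, peval_psubst. unfold vw_quartic.
  rewrite peval_ppow, peval_psum. f_equal.
  - f_equal. apply functional_extensionality. intros i. unfold vw_sqdiff. rewrite peval_psub, !peval_ppow, !peval_pvar; auto.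
  - f_equal. f_equal. apply sumR_ext. intros i _. unfold padd. rewrite peval_app, !peval_ppow, !peval_pvar; auto.
Qed.

Lemma coef_l1_app P Q : coef_l1 (P ++ Q) = coef_l1 P + coef_l1 Q.
Proof. induction P; simpl; [lra|]. rewrite IHP; lra. Qed.
Lemma coef_l1_pscale c P : coef_l1 (pscale c P) = Rabs c * coef_l1 P.
Proof. induction P; simpl; [lra|]. rewrite IHP, Rabs_mult; lra. Qed.
Lemma coef_l1_pmul_pconst c X : coef_l1 (pmul (pconst c) X) = Rabs c * coef_l1 X.
Proof. unfold pmul, pconst; simpl. rewrite app_nil_r. induction X; simpl; [lra|]. rewrite IHX, Rabs_mult; lra. Qed.
Lemma coef_l1_psubst_app P Q sigma : coef_l1 (psubst (P ++ Q) sigma) = coef_l1 (psubst P sigma) + coef_l1 (psubst Q sigma).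
Proof. rewrite !psubst_eq, flat_map_app, coef_l1_app; auto. Qed.
Lemma coef_l1_psubst_scale c P sigma : coef_l1 (psubst (pscale c P) sigma) = Rabs c * coef_l1 (psubst P sigma).
Proof.
  rewrite !psubst_eq. induction P as [|t P IH]; [simpl; lra|]. unfold pscale in *.
  cbn [map flat_map fst snd]. rewrite !coef_l1_app, IH, !coef_l1_pmul_pconst, Rabs_mult. lra.
Qed.

Lemma sq_sum_div_le_sum_sq k a : (1 <= k)%nat ->
  (sumR (seq 0 k) a) ^ 2 / INR k <= sumR (seq 0 k) (fun j => a j ^ 2).
Proof.
  intros Hk. set (s := sumR (seq 0 k) a). assert (HK : 0 < INR k) by (apply lt_0_INR; lia).
  assert (H0 : 0 <= sumR (seq 0 k) (fun j => (a j - s / INR k) ^ 2)).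
  { rewrite <- (sumR_zero (seq 0 k) (fun _ => 0)) by auto. apply sumR_le. intros; apply pow2_ge_0. }
  rewrite (sumR_ext _ _ (fun j => a j ^ 2 + ((-2 * (s / INR k)) * a j + (s / INR k) ^ 2))) in H0 by (intros; ring).
  rewrite sumR_plus, sumR_plus, sumR_scal, sumR_const, length_seq in H0. fold s in H0.
  replace (INR k * (s / INR k) ^ 2) with (s ^ 2 / INR k) in H0 by (field; lra).
  replace (-2 * (s / INR k) * s) with (-2 * (s ^ 2 / INR k)) in H0 by (field; lra). lra.
Qed.

Definition sqnorm_pow (n' d' : nat) : mpoly := ppow (psum (seq 0 n') (fun i => ppow (pvar i) 2)) d'.
Definition sub_sqnorm_pow (r n' d' : nat) (f : mpoly) : mpoly := psub f (pscale (1 / INR r) (sqnorm_pow n' d')).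

Lemma supp_sqnorm_pow n' d' : supp (hmon false n' (2*d')) (sqnorm_pow n' d').
Proof. unfold sqnorm_pow. eapply supp_hmon_deg_eq; [|apply (supp_ppow_hmon _ _ 2)]. lia.
  apply supp_psum. intros i Hi; apply in_seq in Hi. apply supp_pvarpow_hmon; try lia; discriminate. Qed.

Lemma peval_sqnorm_pow n' d' z : peval (sqnorm_pow n' d') z = (sumR (seq 0 n') (fun i => z i ^ 2)) ^ d'.
Proof. unfold sqnorm_pow. rewrite peval_ppow, peval_psum. f_equal. apply sumR_ext. intros; rewrite peval_ppow, peval_pvar; auto. Qed.

Lemma is_form_supp n k P : supp (hmon false n k) P -> is_form n k P.
Proof. intros H. split. - intros a Ha; apply H; auto. - intros a Ha; apply H; auto. Qed.

Lemma coef_l1_pol_lhs_le r n' d' f : (1 <= r)%nat ->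
  coef_l1 (pol_lhs r n' d' (sub_sqnorm_pow r n' d' f)) <=
  coef_l1 (psubst f (vw_sqdiff n')) + coef_l1 (psubst (sqnorm_pow n' d') (vw_sqdiff n')) + coef_l1 (vw_quartic n' d').
Proof.
  intros Hr. assert (HrR : 1 <= INR r) by (apply (le_INR 1); lia).
  unfold pol_lhs, sub_sqnorm_pow, psub, padd.
  rewrite coef_l1_app, coef_l1_pscale, coef_l1_psubst_app, !coef_l1_psubst_scale.
  assert (0 <= coef_l1 (psubst (sqnorm_pow n' d') (vw_sqdiff n'))) by apply coef_l1_nonneg.
  assert (0 <= coef_l1 (vw_quartic n' d')) by apply coef_l1_nonneg.
  rewrite (Rabs_right (1 / (2 * INR r))) by (apply Rle_ge, Rlt_le, Rdiv_lt_0_compat; lra).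
  rewrite (Rabs_right (1 / INR r)) by (apply Rle_ge, Rlt_le, Rdiv_lt_0_compat; lra).
  replace (Rabs (-1)) with 1 by (rewrite Rabs_left; lra).
  assert (1 / INR r <= 1) by (apply (Rmult_le_reg_r (INR r)); [lra|]; field_simplify; lra).
  assert (1 / (2 * INR r) <= 1) by (apply (Rmult_le_reg_r (2 * INR r)); [lra|]; field_simplify; lra).
  nra.
Qed.

(* On the unit sphere of R^(2n'), sum v_i^4 >= (sum v_i^2)^2 / (2n') = 1 / (2n'). *)
Lemma vw_quartic_sphere_ge n' v : (1 <= n')%nat -> sumR (seq 0 (2 * n')) (fun i => v i ^ 2) = 1 ->
  1 / (2 * INR n') <= sumR (seq 0 n') (fun i => v i ^ 4 + v (n' + i)%nat ^ 4).
Proof.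
  intros Hn Hv. assert (0 < INR n') by (apply lt_0_INR; lia).
  rewrite sumR_plus, <- sumR_double.
  rewrite (sumR_ext _ _ (fun j => (v j ^ 2) ^ 2)) by (intros; ring).
  eapply Rle_trans; [|apply sq_sum_div_le_sum_sq; lia].
  rewrite Hv, mult_INR. replace (INR 2) with 2 by (simpl; lra). right; field; lra.
Qed.

Lemma pol_lhs_sphere_ge r n' d' f c v : (1 <= n')%nat -> (1 <= r)%nat -> 1 / INR r <= c ->
  (forall z, c * (sumR (seq 0 n') (fun i => z i ^ 2)) ^ d' <= peval f z) ->
  sumR (seq 0 (2 * n')) (fun i => v i ^ 2) = 1 ->
  1 / (2 * INR r) * (1 / (2 * INR n')) ^ d' <= peval (pol_lhs r n' d' (sub_sqnorm_pow r n' d' f)) v.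
Proof.
  intros Hn Hr Hcr Hf Hv. assert (HrR : 0 < INR r) by (apply lt_0_INR; lia).
  rewrite peval_pol_lhs. unfold sub_sqnorm_pow. rewrite peval_psub, peval_pscale, peval_sqnorm_pow.
  set (z := fun i => v i ^ 2 - v (n' + i)%nat ^ 2).
  set (Y := sumR (seq 0 n') (fun i => z i ^ 2)).
  assert (HYd : 0 <= Y ^ d') by (apply pow_le, sumR_sq_nonneg).
  assert (Hq : 0 <= peval f z - 1 / INR r * Y ^ d') by (specialize (Hf z); fold Y in Hf; nra).
  assert (HS : (1 / (2 * INR n')) ^ d' <= sumR (seq 0 n') (fun i => v i ^ 4 + v (n' + i)%nat ^ 4) ^ d').
  { apply pow_incr. split; [apply Rlt_le, Rdiv_lt_0_compat; [lra|apply Rmult_lt_0_compat; [lra|apply lt_0_INR; lia]]|].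
    apply vw_quartic_sphere_ge; auto. }
  assert (0 < 1 / (2 * INR r)) by (apply Rdiv_lt_0_compat; lra).
  change (sumR (seq 0 n') (fun i => (v i ^ 2 - v (n' + i)%nat ^ 2) ^ 2)) with Y.
  nra.
Qed.

Lemma Pol_eventually n' d' f : (1 <= n')%nat -> (1 <= d')%nat -> supp (hmon false n' (2*d')) f ->
  (exists c, 0 < c /\ forall z, c * (sumR (seq 0 n') (fun i => z i ^ 2)) ^ d' <= peval f z) ->
  exists r0, forall r, (r0 <= r)%nat -> Pol r n' d' (sub_sqnorm_pow r n' d' f).
Proof.
  intros Hn Hd Hf (c & Hc & Hcf).
  set (B0 := coef_l1 (psubst f (vw_sqdiff n')) + coef_l1 (psubst (sqnorm_pow n' d') (vw_sqdiff n'))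
             + coef_l1 (vw_quartic n' d')).
  set (e := (1 / (2 * INR n')) ^ d').
  assert (He : 0 < e) by (apply pow_lt, Rdiv_lt_0_compat; [lra|]; apply Rmult_lt_0_compat; [lra|apply lt_0_INR; lia]).
  destruct (INR_unbounded (1 / c)) as [k1 Hk1].
  destruct (INR_unbounded (8 * INR d' ^ 2 * B0 / e)) as [k2 Hk2].
  exists (S (Nat.max k1 k2)). intros r Hr.
  assert (HrR : 1 <= INR r) by (apply (le_INR 1); lia).
  assert (Hrk1 : 1 / c < INR r) by (apply Rlt_le_trans with (INR k1); [lra|apply le_INR; lia]).
  assert (Hrk2 : 8 * INR d' ^ 2 * B0 < INR r * e).
  { assert (8 * INR d' ^ 2 * B0 / e < INR r) by (apply Rlt_le_trans with (INR k2); [lra|apply le_INR; lia]).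
    apply (Rmult_lt_compat_r e) in H; auto. unfold Rdiv in H. rewrite Rmult_assoc, Rinv_l in H by lra. lra. }
  assert (Hcr : 1 / INR r <= c).
  { apply (Rmult_le_reg_r (INR r)); [lra|]. replace (1 / INR r * INR r) with 1 by (field; lra).
    replace 1 with (c * (1 / c)) at 1 by (field; lra). apply Rmult_le_compat_l; lra. }
  assert (Hq : supp (hmon false n' (2*d')) (sub_sqnorm_pow r n' d' f)).
  { unfold sub_sqnorm_pow. apply supp_psub; auto. apply supp_pscale, supp_sqnorm_pow. }
  apply Pol_unfold. split; [apply is_form_supp; auto|].
  apply (polya_nonneg_coefs (2*n') (2*d')); [lia|apply supp_pol_lhs; auto|apply vw_sqnorm_is_sqsum|].
  intros b Hb. set (M := (r * r + 2 * d')%nat).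
  destruct (simplex_point_props (2*n') M b ltac:(unfold M; lia) Hb) as (_ & _ & Hv).
  eapply Rle_trans; [|apply (pol_lhs_sphere_ge r n' d' f c); auto; lia].
  assert (HA := coef_l1_pol_lhs_le r n' d' f ltac:(lia)). fold B0 in HA.
  assert (HA0 : 0 <= coef_l1 (pol_lhs r n' d' (sub_sqnorm_pow r n' d' f))) by apply coef_l1_nonneg.
  assert (HM : INR r * INR r <= INR M) by (rewrite <- mult_INR; apply le_INR; unfold M; lia).
  replace (INR (2 * d')) with (2 * INR d') by (rewrite mult_INR; simpl; lra).
  fold M. fold e.
  apply (Rle_trans _ ((2 * INR d') ^ 2 * B0 / (INR r * INR r))).
  - assert (Hd2 : 0 <= (2 * INR d') ^ 2) by apply pow2_ge_0.
    unfold Rdiv. apply Rmult_le_compat.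
    + apply Rmult_le_pos; auto.
    + apply Rlt_le, Rinv_0_lt_compat; nra.
    + apply Rmult_le_compat_l; auto.
    + apply Rinv_le_contravar; nra.
  - replace ((2 * INR d') ^ 2 * B0 / (INR r * INR r)) with ((8 * INR d' ^ 2 * B0) / (2 * INR r * INR r)) by (field; lra).
    replace (1 / (2 * INR r) * e) with ((INR r * e) / (2 * INR r * INR r)) by (field; lra).
    unfold Rdiv. apply Rmult_le_compat_r; [left; apply Rinv_0_lt_compat; nra|lra].
Qed.

Lemma Rmax_pos_part_diff x : Rmax x 0 - Rmax (- x) 0 = x.
Proof. unfold Rmax; destruct (Rle_dec x 0), (Rle_dec (- x) 0); lra. Qed.

Lemma Rmax_pos_part_sq_sum x : Rmax x 0 ^ 2 + Rmax (- x) 0 ^ 2 = x ^ 2.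
Proof. unfold Rmax; destruct (Rle_dec x 0), (Rle_dec (- x) 0); nra. Qed.

Lemma Rmax_pos_part_sum_pos x : x <> 0 -> 0 < Rmax x 0 + Rmax (- x) 0.
Proof. unfold Rmax; destruct (Rle_dec x 0), (Rle_dec (- x) 0); intros; try lra. Qed.

Lemma Rmax_pos_part_nonneg x : 0 <= Rmax x 0.
Proof. apply Rmax_r. Qed.

(* Evaluate the certificate at [v_i = sqrt (max z_i 0)], [w_i = sqrt (max (- z_i) 0)]: the point is
   nonnegative, [v^2 - w^2 = z] and [v^4 + w^4 = z^2]. *)
Lemma Pol_lower_bound r N D q : (1 <= r)%nat -> Pol r N D q -> forall z, (exists i, (i < N)%nat /\ z i <> 0) ->
  0 <= peval q z + 1 / (2 * INR r) * (sumR (seq 0 N) (fun i => z i ^ 2)) ^ D.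
Proof.
  intros Hr HP z (i0 & Hi0 & Hz0). apply Pol_unfold in HP. destruct HP as [[Hvars _] Hnn].
  set (w := fun j => if lt_dec j N then sqrt (Rmax (z j) 0) else if lt_dec j (2 * N) then sqrt (Rmax (- z (j - N)%nat) 0) else 0).
  assert (Hw0 : forall j, 0 <= w j) by (intros j; unfold w; destruct (lt_dec j N); [apply sqrt_pos|destruct (lt_dec j (2*N)); [apply sqrt_pos|lra]]).
  assert (Hw1 : forall i, (i < N)%nat -> w i ^ 2 = Rmax (z i) 0).
  { intros i Hi. unfold w. destruct (lt_dec i N); [|lia]. apply pow2_sqrt, Rmax_pos_part_nonneg. }
  assert (Hw2 : forall i, (i < N)%nat -> w (N + i)%nat ^ 2 = Rmax (- z i) 0).
  { intros i Hi. unfold w. destruct (lt_dec (N + i) N); [lia|]. destruct (lt_dec (N + i) (2 * N)); [|lia].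
    replace (N + i - N)%nat with i by lia. apply pow2_sqrt, Rmax_pos_part_nonneg. }
  assert (H0 := peval_nonneg _ w (Hnn) Hw0). rewrite peval_pmul, peval_ppow in H0.
  change (0 <= peval (pol_lhs r N D q) w * peval (vw_sqnorm N) w ^ (r * r)) in H0.
  assert (HT : 0 < peval (vw_sqnorm N) w).
  { unfold vw_sqnorm, padd. rewrite peval_app, !peval_psum.
    rewrite (sumR_ext _ (fun i => peval (ppow (pvar i) 2) w) (fun i => w i ^ 2)) by (intros; rewrite peval_ppow, peval_pvar; auto).
    rewrite (sumR_ext _ (fun i => peval (ppow (pvar (N + i)) 2) w) (fun i => w (N + i)%nat ^ 2)) by (intros; rewrite peval_ppow, peval_pvar; auto).
    pose proof (term_le_sumR (seq 0 N) w i0 ltac:(apply in_seq; lia)).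
    pose proof (term_le_sumR (seq 0 N) (fun i => w (N + i)%nat) i0 ltac:(apply in_seq; lia)). cbv beta in H1.
    rewrite Hw1 in H by auto. rewrite Hw2 in H1 by auto. pose proof (Rmax_pos_part_sum_pos (z i0) Hz0). lra. }
  assert (HG : 0 <= peval (pol_lhs r N D q) w).
  { assert (0 < peval (vw_sqnorm N) w ^ (r * r)) by (apply pow_lt; auto).
    destruct (Rle_lt_dec 0 (peval (pol_lhs r N D q) w)); auto. nra. }
  rewrite peval_pol_lhs in HG.
  rewrite (peval_in_vars N q _ z) in HG; auto.
  2:{ intros i Hi. rewrite Hw1, Hw2 by auto. apply Rmax_pos_part_diff. }
  rewrite (sumR_ext _ _ (fun i => z i ^ 2)) in HG; auto.
  intros i Hi; apply in_seq in Hi. replace (w i ^ 4) with ((w i ^ 2) ^ 2) by ring.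
  replace (w (N + i)%nat ^ 4) with ((w (N + i)%nat ^ 2) ^ 2) by ring.
  rewrite Hw1, Hw2 by lia. apply Rmax_pos_part_sq_sum.
Qed.

(** * Positive definite forms are coercive *)

Lemma cv_const c : Un_cv (fun _ => c) c.
Proof. intros eps He. exists 0%nat. intros. unfold Rdist. rewrite Rminus_diag, Rabs_R0; lra. Qed.

Lemma cv_pow (a : nat -> R) l k : Un_cv a l -> Un_cv (fun n => a n ^ k) (l ^ k).
Proof. intros H. induction k; simpl. - apply cv_const. - apply CV_mult; auto. Qed.

Lemma cv_prodR (u : nat -> nat -> R) (l : nat -> R) L :
  (forall i, Un_cv (fun k => u k i) (l i)) -> Un_cv (fun k => prodR L (u k)) (prodR L l).
Proof. intros H. unfold prodR; induction L; simpl. - apply cv_const. - apply CV_mult; auto. Qed.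

Lemma peval_cv P (u : nat -> nat -> R) (l : nat -> R) :
  (forall i, Un_cv (fun k => u k i) (l i)) -> Un_cv (fun k => peval P (u k)) (peval P l).
Proof.
  intros H. induction P as [|t P IH]; simpl.
  - apply cv_const.
  - apply CV_plus; auto. apply CV_mult; [apply cv_const|]. unfold meval.
    apply (cv_prodR (fun k i => u k i ^ mexp (snd t) i) (fun i => l i ^ mexp (snd t) i)).
    intros i; apply cv_pow; auto.
Qed.

Lemma cv_sumR (u : nat -> nat -> R) (l : nat -> R) L :
  (forall i, Un_cv (fun k => u k i) (l i)) -> Un_cv (fun k => sumR L (u k)) (sumR L l).
Proof. intros H. unfold sumR; induction L; simpl. - apply cv_const. - apply CV_plus; auto. Qed.

Definition strict_incr (phi : nat -> nat) : Prop := forall k, (phi k < phi (S k))%nat.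

Lemma strict_incr_ge phi : strict_incr phi -> forall k, (k <= phi k)%nat.
Proof. intros H k; induction k; [lia|]. specialize (H k); lia. Qed.

Lemma strict_incr_mono phi : strict_incr phi -> forall a b, (a <= b)%nat -> (phi a <= phi b)%nat.
Proof. intros H a b Hab; induction Hab; auto. specialize (H m); lia. Qed.

Lemma strict_incr_comp phi psi : strict_incr phi -> strict_incr psi -> strict_incr (fun k => phi (psi k)).
Proof.
  intros H1 H2 k. specialize (H2 k). assert (forall a b, (a < b)%nat -> (phi a < phi b)%nat).
  { intros a b Hab. apply Nat.lt_le_trans with (phi (S a)); [apply H1|apply strict_incr_mono; auto]. }
  auto.
Qed.

Lemma cv_subseq (a : nat -> R) l psi : strict_incr psi -> Un_cv a l -> Un_cv (fun k => a (psi k)) l.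
Proof.
  intros Hs H eps He. destruct (H eps He) as [N HN]. exists N. intros n Hn.
  apply HN. pose proof (strict_incr_ge psi Hs n). lia.
Qed.

Lemma inv_INR_S_lt eps : 0 < eps -> exists k0 : nat, forall k, (k0 <= k)%nat -> 1 / INR (S k) < eps.
Proof.
  intros He. destruct (INR_unbounded (1 / eps)) as [k0 Hk0]. exists k0. intros k Hk.
  assert (INR k0 <= INR k) by (apply le_INR; auto). rewrite S_INR.
  assert (1 / eps < INR k + 1) by lra.
  apply (Rmult_lt_reg_r (INR k + 1)). pose proof (pos_INR k); lra.
  replace (1 / (INR k + 1) * (INR k + 1)) with 1 by (field; pose proof (pos_INR k); lra).
  apply (Rmult_lt_reg_l (/ eps)). apply Rinv_0_lt_compat; auto.
  replace (/ eps * 1) with (1 / eps) by (field; lra).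
  replace (/ eps * (eps * (INR k + 1))) with (INR k + 1) by (field; lra). auto.
Qed.

Lemma abs_le1 x : Rabs x <= 1 -> -1 <= x <= 1.
Proof. unfold Rabs; destruct (Rcase_abs x); lra. Qed.

Fixpoint diag_subseq (g : nat -> nat -> nat) (k : nat) : nat :=
  match k with O => g 0%nat 0%nat | S k' => g (S (diag_subseq g k')) (S k') end.

Lemma bolzano_weierstrass_subseq (a : nat -> R) : (forall k, Rabs (a k) <= 1) ->
  exists psi, strict_incr psi /\ exists L, Un_cv (fun k => a (psi k)) L.
Proof.
  intros Ha. destruct (Bolzano_Weierstrass a (fun c => -1 <= c <= 1) (compact_P3 (-1) 1)) as [L HL].
  { intros k; apply abs_le1; auto. }
  assert (Hex : forall N k, exists p, (N <= p)%nat /\ Rabs (a p - L) < 1 / INR (S k)).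
  { intros N k. assert (Hp : 0 < 1 / INR (S k)) by (apply Rdiv_lt_0_compat; [lra|apply lt_0_INR; lia]).
    destruct (HL (disc L (mkposreal _ Hp)) N) as [p [Hp1 Hp2]].
    - exists (mkposreal _ Hp). intros y Hy; auto.
    - exists p. split; auto. }
  set (g := fun N k => proj1_sig (constructive_indefinite_description _ (Hex N k))).
  assert (Hg : forall N k, (N <= g N k)%nat /\ Rabs (a (g N k) - L) < 1 / INR (S k)).
  { intros N k. unfold g. destruct (constructive_indefinite_description _ (Hex N k)); auto. }
  exists (diag_subseq g). split.
  - intros k. simpl. destruct (Hg (S (diag_subseq g k)) (S k)); lia.
  - exists L. intros eps He. destruct (inv_INR_S_lt eps He) as [k0 Hk0]. exists k0. intros k Hk.
    unfold Rdist. assert (Rabs (a (diag_subseq g k) - L) < 1 / INR (S k)).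
    { destruct k; simpl; apply Hg. }
    specialize (Hk0 k Hk). lra.
Qed.

Lemma bolzano_weierstrass_vec (u : nat -> nat -> R) : (forall k i, Rabs (u k i) <= 1) -> forall n,
  exists phi, strict_incr phi /\ exists l : nat -> R, forall i, (i < n)%nat -> Un_cv (fun k => u (phi k) i) (l i).
Proof.
  intros Hu n. induction n.
  - exists (fun k => k). split; [intros k; lia|]. exists (fun _ => 0). intros; lia.
  - destruct IHn as (phi & Hphi & l & Hl).
    destruct (bolzano_weierstrass_subseq (fun k => u (phi k) n)) as (psi & Hpsi & L & HL); [intros; apply Hu|].
    exists (fun k => phi (psi k)). split; [apply strict_incr_comp; auto|].
    exists (fun i => if Nat.eqb i n then L else l i). intros i Hi.
    destruct (Nat.eqb_spec i n).
    + subst; auto.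
    + apply (cv_subseq (fun k => u (phi k) i)); auto. apply Hl; lia.
Qed.

Lemma form_vanish_origin N k f z : (1 <= k)%nat -> supp (hmon false N k) f ->
  sumR (seq 0 N) (fun i => z i ^ 2) = 0 -> peval f z = 0.
Proof.
  intros Hk Hf Hz.
  assert (Hvars : in_vars N f) by (intros a Ha; apply Hf; auto).
  rewrite (peval_in_vars N f z (fun i => 0 * z i)); auto.
  - rewrite (peval_hmon_scale false N k) by auto. rewrite pow_i by lia. lra.
  - intros i Hi. rewrite (sumR_sq_zero (seq 0 N) z Hz i); [lra|apply in_seq; lia].
Qed.

Lemma form_normalize N k f z : supp (hmon false N (2 * k)) f ->
  0 < sumR (seq 0 N) (fun i => z i ^ 2) ->
  let s := sumR (seq 0 N) (fun i => z i ^ 2) in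
  let u := fun i => if lt_dec i N then z i / sqrt s else 0 in
  sumR (seq 0 N) (fun i => u i ^ 2) = 1 /\ peval f z = s ^ k * peval f u.
Proof.
  intros Hf Hs s u. change (0 < s) in Hs.
  assert (Hvars : in_vars N f) by (intros a Ha; apply Hf; auto).
  assert (Hsq : sqrt s * sqrt s = s) by (apply sqrt_sqrt; lra).
  assert (Hsq0 : 0 < sqrt s) by (apply sqrt_lt_R0; auto).
  split.
  - rewrite (sumR_ext _ _ (fun i => / s * z i ^ 2)).
    + rewrite sumR_scal. fold s. field. lra.
    + intros i Hi. apply in_seq in Hi. unfold u. destruct (lt_dec i N); [|lia].
      unfold Rdiv. rewrite Rpow_mult_distr, pow_inv, pow2_sqrt by lra. ring.
  - rewrite (peval_in_vars N f u (fun i => / sqrt s * z i) Hvars).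
    2:{ intros i Hi. unfold u. destruct (lt_dec i N); [|lia]. unfold Rdiv; ring. }
    rewrite (peval_hmon_scale false N (2 * k)) by auto.
    rewrite pow_mult, pow_inv, pow2_sqrt by lra. rewrite pow_inv.
    field. apply pow_nonzero. lra.
Qed.

Lemma posdef_form_min_sphere N f : in_vars N f ->
  (forall z, sumR (seq 0 N) (fun i => z i ^ 2) <> 0 -> 0 < peval f z) ->
  exists c, 0 < c /\ forall u, sumR (seq 0 N) (fun i => u i ^ 2) = 1 -> c <= peval f u.
Proof.
  intros Hvars Hpos.
  set (nrm := fun z : nat -> R => sumR (seq 0 N) (fun i => z i ^ 2)).
  destruct (classic (exists c, 0 < c /\ forall u, nrm u = 1 -> c <= peval f u)) as [|Hn]; auto.
  exfalso.
  assert (Hk : forall k, exists u, (forall i, (N <= i)%nat -> u i = 0) /\ nrm u = 1 /\ peval f u < 1 / INR (S k)).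
  { intros k. apply NNPP. intro Hn2. apply Hn. exists (1 / INR (S k)).
    split; [apply Rdiv_lt_0_compat; [lra|apply lt_0_INR; lia]|].
    intros u Hu. apply Rnot_lt_le. intro Hlt. apply Hn2.
    exists (fun i => if lt_dec i N then u i else 0). split; [|split].
    - intros i Hi. destruct (lt_dec i N); [lia|auto].
    - rewrite <- Hu. apply sumR_ext. intros i Hi; apply in_seq in Hi. destruct (lt_dec i N); [auto|lia].
    - rewrite (peval_in_vars N f _ u); auto. intros i Hi. destruct (lt_dec i N); [auto|lia]. }
  destruct (choice _ Hk) as [u Hu].
  assert (Hu1 : forall k i, Rabs (u k i) <= 1).
  { intros k i. destruct (Hu k) as (H0 & H1 & _). destruct (lt_dec i N).
    - apply sq_le1. rewrite <- H1. apply term_le_sumR, in_seq; lia.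
    - rewrite H0 by lia. rewrite Rabs_R0; lra. }
  destruct (bolzano_weierstrass_vec u Hu1 N) as (phi & Hphi & l & Hl).
  set (l' := fun i => if lt_dec i N then l i else 0).
  assert (Hl' : forall i, Un_cv (fun k => u (phi k) i) (l' i)).
  { intros i. unfold l'. destruct (lt_dec i N); auto.
    replace (fun k => u (phi k) i) with (fun _ : nat => 0) by
      (apply functional_extensionality; intros k; destruct (Hu (phi k)) as (H0 & _); rewrite H0; auto; lia).
    apply cv_const. }
  assert (Hnl : nrm l' = 1).
  { apply (UL_sequence (fun k => nrm (u (phi k)))).
    - apply (cv_sumR (fun k i => u (phi k) i ^ 2) (fun i => l' i ^ 2)). intros; apply cv_pow; auto.
    - replace (fun k => nrm (u (phi k))) with (fun _ : nat => 1) by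
        (apply functional_extensionality; intros k; destruct (Hu (phi k)) as (_ & H1 & _); auto).
      apply cv_const. }
  assert (Hp : 0 < peval f l') by (apply Hpos; fold (nrm l'); lra).
  destruct (peval_cv f (fun k => u (phi k)) l' Hl' (peval f l' / 2)) as [K1 HK1]; [lra|].
  destruct (inv_INR_S_lt (peval f l' / 2)) as [k0 Hk0]; [lra|].
  set (k := Nat.max K1 k0).
  specialize (HK1 k ltac:(unfold k; lia)). unfold Rdist in HK1. apply Rabs_def2 in HK1.
  assert (Hk0' := Hk0 (phi k) ltac:(pose proof (strict_incr_ge phi Hphi k); unfold k in *; lia)).
  destruct (Hu (phi k)) as (_ & _ & H2). lra.
Qed.

Lemma posdef_form_bounded_below N k f : (1 <= k)%nat -> supp (hmon false N (2 * k)) f ->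
  (forall z, sumR (seq 0 N) (fun i => z i ^ 2) <> 0 -> 0 < peval f z) ->
  exists c, 0 < c /\ forall z, c * (sumR (seq 0 N) (fun i => z i ^ 2)) ^ k <= peval f z.
Proof.
  intros Hk Hf Hpos.
  destruct (posdef_form_min_sphere N f) as (c & Hc & Hmin); auto.
  { intros a Ha; apply Hf; auto. }
  exists c. split; auto. intros z.
  destruct (Rle_lt_or_eq_dec 0 _ (sumR_sq_nonneg (seq 0 N) z)) as [Hs|Hs].
  - destruct (form_normalize N k f z Hf Hs) as [Hu ->].
    specialize (Hmin _ Hu). assert (0 < sumR (seq 0 N) (fun i => z i ^ 2) ^ k) by (apply pow_lt; auto).
    nra.
  - rewrite (form_vanish_origin N (2 * k) f z) by (auto; lia). rewrite <- Hs, pow_i by lia. lra.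
Qed.

Lemma supp_pmul_pconst ev n k c P : supp (hmon ev n k) P -> supp (hmon ev n k) (pmul (pconst c) P).
Proof. intros H. eapply supp_hmon_deg_eq; [|apply supp_pmul_hmon; [apply supp_pconst_hmon|apply H]]. lia. Qed.

Lemma ER_le_trans a b c : ER_le a b -> ER_le b c -> ER_le a c.
Proof. destruct a, b, c; simpl; auto; try tauto; lra. Qed.

Lemma ER_max_l a b : ER_le a (ER_max a b).
Proof. destruct a, b; simpl; auto; try lra. apply Rmax_l. Qed.
Lemma ER_max_r a b : ER_le b (ER_max a b).
Proof. destruct a, b; simpl; auto; try lra. apply Rmax_r. Qed.
Lemma ER_max_lub a b c : ER_le a c -> ER_le b c -> ER_le (ER_max a b) c.
Proof. destruct a, b, c; simpl; auto; try tauto. intros; apply Rmax_lub; auto. Qed.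

Lemma ER_lt_le_lt y X v : ER_le (Fin y) X -> Fin y <> X -> ER_le X (Fin v) -> y < v.
Proof.
  destruct X as [x| |]; simpl; try tauto.
  intros H1 H2 H3. destruct H1 as [H1|H1]; [lra|]. subst; congruence.
Qed.

Lemma ER_sup_le E X : (forall y, E y -> ER_le (Fin y) X) -> ER_le (ER_sup E) X.
Proof.
  intros H. unfold ER_sup. destruct (excluded_middle_informative (exists x, E x)) as [ne|ne]; [|simpl; auto].
  destruct (excluded_middle_informative (bound E)) as [b|nb].
  - destruct (completeness E b ne) as [l [Hl1 Hl2]]. simpl. destruct X as [y| |]; simpl.
    + apply Hl2. intros x Hx. specialize (H x Hx). simpl in H. auto.
    + auto.
    + destruct ne as [x Hx]. specialize (H x Hx). simpl in H. auto.
  - destruct X as [y| |]; simpl.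
    + apply nb. exists y. intros x Hx. specialize (H x Hx). simpl in H. auto.
    + auto.
    + destruct ne as [x Hx]. specialize (H x Hx). simpl in H. auto.
Qed.

Lemma ER_sup_ge E y : E y -> ER_le (Fin y) (ER_sup E).
Proof.
  intros Hy. unfold ER_sup. destruct (excluded_middle_informative (exists x, E x)) as [ne|ne].
  - destruct (excluded_middle_informative (bound E)) as [b|nb]; simpl; auto.
    destruct (completeness E b ne) as [l [Hl1 Hl2]]. simpl. apply Hl1; auto.
  - exfalso; apply ne; exists y; auto.
Qed.

Lemma ER_inf_ge E y : (forall v, E v -> y <= v) -> ER_le (Fin y) (ER_inf E).
Proof.
  intros H. unfold ER_inf.
  assert (Hs : ER_le (ER_sup (fun x => E (- x))) (Fin (- y))).
  { apply ER_sup_le. intros x Hx. simpl. specialize (H _ Hx). lra. }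
  destruct (ER_sup (fun x => E (- x))); simpl in *; auto; lra.
Qed.

Lemma ER_inf_le E v : E v -> ER_le (ER_inf E) (Fin v).
Proof.
  intros Hv. unfold ER_inf.
  assert (Hs : ER_le (Fin (- v)) (ER_sup (fun x => E (- x)))) by (apply ER_sup_ge; rewrite Ropp_involutive; auto).
  destruct (ER_sup (fun x => E (- x))); simpl in *; auto; lra.
Qed.

Lemma m_seq_le (l : nat -> ER) X r : (forall i, (1 <= i)%nat -> ER_le (l i) X) -> ER_le (m_seq l r) X.
Proof. intros H. induction r; simpl; auto. apply ER_max_lub; auto. apply H; lia. Qed.

Lemma m_seq_ge (l : nat -> ER) r i : (1 <= i <= r)%nat -> ER_le (l i) (m_seq l r).
Proof.
  induction r; intros Hi; [lia|]. simpl. destruct (Nat.eq_dec i (S r)) as [->|Hne].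
  - apply ER_max_r.
  - eapply ER_le_trans; [apply IHr; lia|apply ER_max_l].
Qed.

Lemma m_seq_cv (l : nat -> ER) X : X <> MInf ->
  (forall i, (1 <= i)%nat -> ER_le (l i) X) ->
  (forall y, ER_le (Fin y) X -> Fin y <> X -> exists r0, forall r, (r0 <= r)%nat -> ER_le (Fin y) (l r)) ->
  ER_cv (m_seq l) X.
Proof.
  intros HX Hle Hev.
  assert (Hlow : forall y, ER_le (Fin y) X -> Fin y <> X ->
            exists r0, forall k, (r0 <= k)%nat -> ER_le (Fin y) (m_seq l k) /\ ER_le (m_seq l k) X).
  { intros y Hy1 Hy2. destruct (Hev y Hy1 Hy2) as [r0 Hr0]. exists (Nat.max r0 1). intros k Hk. split.
    - apply (ER_le_trans _ (l k)); [apply Hr0; lia|apply m_seq_ge; lia].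
    - apply m_seq_le; auto. }
  destruct X as [P| |]; simpl; [| |congruence].
  - intros eps He. destruct (Hlow (P - eps / 2)) as [r0 Hr0]; simpl; [lra|intro E; injection E; lra|].
    exists r0. intros k Hk. destruct (Hr0 k Hk) as [H1 H2].
    destruct (m_seq l k) as [y| |]; simpl in *; try tauto.
    exists y. split; auto. apply Rabs_def1; lra.
  - intros M. destruct (Hlow (M + 1)) as [r0 Hr0]; simpl; auto; [discriminate|].
    exists r0. intros k Hk. destruct (Hr0 k Hk) as [H1 _].
    destruct (m_seq l k) as [y| |]; simpl in *; try tauto.
    + split; [lra|]. intro E; injection E; lra.
    + split; auto. discriminate.
Qed.

(** * The forms [f_gamma] and the sequence [l_r] *)

Lemma pow_eq0_nonneg x k : (1 <= k)%nat -> 0 <= x -> x ^ k = 0 -> x = 0.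
Proof. intros Hk Hx H. destruct (Rle_lt_or_eq_dec 0 x Hx); auto. assert (0 < x ^ k) by (apply pow_lt; auto). lra. Qed.

Lemma pow_root_exists E k : (1 <= k)%nat -> 0 <= E -> exists s, s ^ k = E.
Proof.
  intros Hk HE. destruct (Req_dec E 0) as [->|HE0].
  - exists 0. apply pow_i; lia.
  - exists (Rpower E (/ INR k)). assert (HEp : 0 < E) by lra.
    assert (HkR : 0 < INR k) by (apply lt_0_INR; lia).
    rewrite <- Rpower_pow by (unfold Rpower; apply exp_pos).
    rewrite Rpower_mult. rewrite Rinv_l by lra. apply Rpower_1; auto.
Qed.

Lemma peval_f_gamma n m d Rad eta beta p g gam z :
  peval (f_gamma n m d Rad eta beta p g gam) z =
  (gam * z (n + m + 2)%nat ^ (2 * d) - peval (homog (2 * d) (n + m + 2) p) z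
     - z (n + 0)%nat ^ 2 * z (n + m + 2)%nat ^ (2 * d - 2)) ^ 2
  + sumR (seq 1 m) (fun i => (peval (homog (2 * d) (n + m + 2) (g i)) z
     - z (n + i)%nat ^ 2 * z (n + m + 2)%nat ^ (2 * d - 2)) ^ 2)
  + ((Rad + sumR (seq 1 m) eta + beta + gam) ^ d * z (n + m + 2)%nat ^ (2 * d)
     - (sumR (seq 0 n) (fun i => z i ^ 2) + sumR (seq 0 (m + 1)) (fun j => z (n + j)%nat ^ 2)) ^ d
     - z (n + (m + 1))%nat ^ (2 * d)) ^ 2.
Proof.
  unfold f_gamma. cbv zeta. unfold padd. rewrite !peval_app.
  rewrite !peval_ppow, !peval_psub, !peval_pmul, !peval_pconst, !peval_ppow, !peval_pvar, peval_psum.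
  rewrite peval_app, !peval_psum.
  assert (E1 : sumR (seq 1 m) (fun i => peval (ppow (psub (homog (2 * d) (n + m + 2) (g i))
              (pmul (ppow (pvar (n + i)) 2) (ppow (pvar (n + m + 2)) (2 * d - 2)))) 2) z) =
     sumR (seq 1 m) (fun i => (peval (homog (2 * d) (n + m + 2) (g i)) z
     - z (n + i)%nat ^ 2 * z (n + m + 2)%nat ^ (2 * d - 2)) ^ 2)).
  { apply sumR_ext. intros i _. rewrite peval_ppow, peval_psub, peval_pmul, !peval_ppow, !peval_pvar. auto. }
  assert (E2 : sumR (seq 0 n) (fun i => peval (ppow (pvar i) 2) z) = sumR (seq 0 n) (fun i => z i ^ 2)).
  { apply sumR_ext. intros; rewrite peval_ppow, peval_pvar; auto. }
  assert (E3 : sumR (seq 0 (m + 1)) (fun j => peval (ppow (pvar (n + j)) 2) z) = sumR (seq 0 (m + 1)) (fun j => z (n + j)%nat ^ 2)).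
  { apply sumR_ext. intros; rewrite peval_ppow, peval_pvar; auto. }
  rewrite E1, E2, E3. ring.
Qed.

Lemma sumR_sq_f_gamma_vars n m z : sumR (seq 0 (n + m + 3)) (fun i => z i ^ 2) =
  sumR (seq 0 n) (fun i => z i ^ 2) + sumR (seq 0 (m + 1)) (fun j => z (n + j)%nat ^ 2)
  + z (n + (m + 1))%nat ^ 2 + z (n + m + 2)%nat ^ 2.
Proof.
  replace (n + m + 3)%nat with (n + ((m + 1) + 1 + 1))%nat by lia.
  rewrite seq_app, sumR_app, (sumR_shift n). rewrite !seq_app, !sumR_app. simpl.
  unfold sumR; simpl. replace (n + (m + 1 + 1))%nat with (n + m + 2)%nat by lia. ring.
Qed.

Lemma f_gamma_nonneg n m d Rad eta beta p g gam z : 0 <= peval (f_gamma n m d Rad eta beta p g gam) z.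
Proof.
  rewrite peval_f_gamma.
  repeat apply Rplus_le_le_0_compat; try apply pow2_ge_0.
  apply sumR_nonneg. intros; apply pow2_ge_0.
Qed.

(* At infinity ([y = 0]) the last square is [((|x|^2 + |s|^2)^d + s_(m+1)^(2d))^2]. *)
Lemma f_gamma_pos_y0 n m d Rad eta beta p g gam z : (1 <= d)%nat ->
  z (n + m + 2)%nat = 0 -> sumR (seq 0 (n + m + 3)) (fun i => z i ^ 2) <> 0 ->
  0 < peval (f_gamma n m d Rad eta beta p g gam) z.
Proof.
  intros Hd Hy Hz. rewrite peval_f_gamma, Hy, pow_i by lia. rewrite Rmult_0_r, Rminus_0_l.
  set (X := sumR (seq 0 n) (fun i => z i ^ 2) + sumR (seq 0 (m + 1)) (fun j => z (n + j)%nat ^ 2)).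
  set (s := z (n + (m + 1))%nat).
  assert (HX : 0 <= X) by (unfold X; pose proof (sumR_sq_nonneg (seq 0 n) z);
    pose proof (sumR_sq_nonneg (seq 0 (m + 1)) (fun j => z (n + j)%nat)); lra).
  assert (HXd : 0 <= X ^ d) by (apply pow_le; auto).
  assert (Hs : 0 <= s ^ (2 * d)) by (rewrite pow_mult; apply pow_le, pow2_ge_0).
  assert (Hpos : 0 < X ^ d + s ^ (2 * d)).
  { destruct (Req_dec (X ^ d + s ^ (2 * d)) 0) as [E|E]; [|lra]. exfalso. apply Hz.
    assert (X = 0) by (apply (pow_eq0_nonneg X d); auto; lra).
    assert (s ^ 2 = 0) by (apply (pow_eq0_nonneg (s ^ 2) d); auto; [apply pow2_ge_0|rewrite <- pow_mult; lra]).
    rewrite sumR_sq_f_gamma_vars. fold X s. rewrite Hy. lra. }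
  assert (0 < (- X ^ d - s ^ (2 * d)) ^ 2) by nra.
  match goal with |- 0 < ?u + _ => assert (0 <= u) end; [|lra].
  apply Rplus_le_le_0_compat; [apply pow2_ge_0|]. apply sumR_nonneg. intros; apply pow2_ge_0.
Qed.

(* On the affine chart [y = 1], [f_gamma z = 0] forces [(x, s)] to encode a point of [S] with
   [p x = gamma - s_0^2 <= gamma]. *)
Lemma f_gamma_pos_y1 n m d Rad eta beta p g gam z :
  (forall x, in_S g m x -> gam < peval p x) -> z (n + m + 2)%nat = 1 ->
  0 < peval (f_gamma n m d Rad eta beta p g gam) z.
Proof.
  intros Hgam Hy1.
  destruct (Rle_lt_or_eq_dec 0 _ (f_gamma_nonneg n m d Rad eta beta p g gam z)) as [|E]; auto. exfalso.
  symmetry in E. rewrite peval_f_gamma, Hy1, !pow1, !Rmult_1_r, peval_homog_y1 in E by auto.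
  rewrite (sumR_ext (seq 1 m) _ (fun i => (peval (g i) z - z (n + i)%nat ^ 2) ^ 2)) in E.
  2:{ intros i _. rewrite peval_homog_y1 by auto. rewrite ?pow1, ?Rmult_1_r; auto. }
  set (a1 := gam - peval p z - z (n + 0)%nat ^ 2) in E.
  set (S2 := sumR (seq 1 m) (fun i => (peval (g i) z - z (n + i)%nat ^ 2) ^ 2)) in E.
  match type of E with _ + _ + ?c ^ 2 = 0 => pose proof (pow2_ge_0 c) end.
  assert (HS2 : 0 <= S2) by apply (sumR_sq_nonneg (seq 1 m) (fun i => peval (g i) z - z (n + i)%nat ^ 2)).
  pose proof (pow2_ge_0 a1).
  assert (Ea1 : a1 = 0) by nra.
  assert (ES2 : S2 = 0) by nra.
  assert (Hin : in_S g m z).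
  { intros i Hi. assert (peval (g i) z - z (n + i)%nat ^ 2 = 0).
    { apply (sumR_sq_zero (seq 1 m) (fun i => peval (g i) z - z (n + i)%nat ^ 2)); auto.
      apply in_seq; lia. }
    pose proof (pow2_ge_0 (z (n + i)%nat)). lra. }
  specialize (Hgam z Hin). unfold a1 in Ea1. pose proof (pow2_ge_0 (z (n + 0)%nat)). lra.
Qed.

Section Relaxation.

Variables (n m d : nat) (p : mpoly) (g : nat -> mpoly) (Rad beta : R) (eta : nat -> R).
Hypotheses (Hd : (1 <= d)%nat) (Hp : in_vars n p) (Hg : forall i, (1 <= i <= m)%nat -> in_vars n (g i))
  (Hdp : forall a, coef p a <> 0 -> (mdeg a <= 2 * d)%nat)
  (Hdg : forall i a, (1 <= i <= m)%nat -> coef (g i) a <> 0 -> (mdeg a <= 2 * d)%nat).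

Lemma supp_f_gamma gam :
  supp (hmon false (n + m + 3) (2 * (2 * d))) (f_gamma n m d Rad eta beta p g gam).
Proof.
  set (N := (n + m + 3)%nat).
  assert (Hv : forall i k, (i < N)%nat -> supp (hmon false N k) (ppow (pvar i) k)).
  { intros i k Hi. apply supp_pvarpow_hmon; auto; discriminate. }
  assert (Hh : forall q, in_vars n q -> (forall a, coef q a <> 0 -> (mdeg a <= 2 * d)%nat) ->
                supp (hmon false N (2 * d)) (homog (2 * d) (n + m + 2) q)).
  { intros q H1 H2. replace N with (S (n + m + 2)) by (unfold N; lia). apply (supp_homog n); auto; lia. }
  assert (Hsy : forall j, (j <= m)%nat -> supp (hmon false N (2 * d)) (pmul (ppow (pvar (n + j)) 2) (ppow (pvar (n + m + 2)) (2 * d - 2)))).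
  { intros j Hj. eapply supp_hmon_deg_eq; [|apply supp_pmul_hmon; apply Hv; unfold N; lia]. lia. }
  unfold f_gamma. cbv zeta. apply supp_padd; [|apply supp_padd].
  - apply supp_ppow_hmon. apply supp_psub; [apply supp_psub|].
    + apply supp_pmul_pconst. apply Hv; unfold N; lia.
    + apply Hh; auto.
    + apply Hsy; lia.
  - apply supp_psum. intros i Hi; apply in_seq in Hi. apply supp_ppow_hmon. apply supp_psub.
    + apply Hh; [apply Hg; lia|]. intros a Ha; apply (Hdg i); auto; lia.
    + apply Hsy; lia.
  - apply supp_ppow_hmon. apply supp_psub; [apply supp_psub|].
    + apply supp_pmul_pconst. apply Hv; unfold N; lia.
    + eapply supp_hmon_deg_eq; [|apply (supp_ppow_hmon _ _ 2)]; [lia|]. apply supp_padd; apply supp_psum.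
      * intros i Hi; apply in_seq in Hi. apply Hv. unfold N; lia.
      * intros j Hj; apply in_seq in Hj. apply Hv. unfold N; lia.
    + apply Hv. unfold N; lia.
Qed.

Lemma f_gamma_posdef gam : (forall x, in_S g m x -> gam < peval p x) ->
  forall z, sumR (seq 0 (n + m + 3)) (fun i => z i ^ 2) <> 0 ->
  0 < peval (f_gamma n m d Rad eta beta p g gam) z.
Proof.
  intros Hgam z Hz.
  destruct (Req_dec (z (n + m + 2)%nat) 0) as [Hy|Hy]; [apply f_gamma_pos_y0; auto|].
  set (t := / z (n + m + 2)%nat).
  assert (Hsc : peval (f_gamma n m d Rad eta beta p g gam) (fun i => t * z i)
                = t ^ (2 * (2 * d)) * peval (f_gamma n m d Rad eta beta p g gam) z)
    by (apply (peval_hmon_scale false (n + m + 3)), supp_f_gamma).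
  assert (Ht : t <> 0) by (apply Rinv_neq_0_compat; auto).
  assert (Htp : 0 < t ^ (2 * (2 * d))) by (rewrite pow_mult; apply pow_lt; nra).
  assert (Hf' : 0 < peval (f_gamma n m d Rad eta beta p g gam) (fun i => t * z i)).
  { apply f_gamma_pos_y1; auto. unfold t. field; auto. }
  rewrite Hsc in Hf'. nra.
Qed.

Lemma l_seq_eventually_ge gam : (forall x, in_S g m x -> gam < peval p x) ->
  exists r0, forall r, (r0 <= r)%nat -> ER_le (Fin gam) (l_seq n m d Rad eta beta p g r).
Proof.
  intros Hgam.
  assert (Hsf := supp_f_gamma gam).
  destruct (posdef_form_bounded_below (n + m + 3) (2 * d) _ ltac:(lia) Hsf (f_gamma_posdef gam Hgam)) as [c Hc].
  destruct (Pol_eventually (n + m + 3) (2 * d) _ ltac:(lia) ltac:(lia) Hsf (ex_intro _ c Hc)) as [r0 Hr0].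
  exists r0. intros r Hr. apply ER_sup_ge, Hr0; auto.
Qed.

Hypotheses (HRad : forall x, in_S g m x -> sumR (seq 0 n) (fun i => x i ^ 2) <= Rad)
  (Heta : forall i x, (1 <= i <= m)%nat -> in_S g m x -> peval (g i) x <= eta i)
  (Hbeta : forall x, in_S g m x -> - peval p x <= beta).

Lemma f_gamma_slack_nonneg gam x : in_S g m x -> peval p x < gam ->
  0 <= (Rad + sumR (seq 1 m) eta + beta + gam) ^ d
       - (sumR (seq 0 n) (fun i => x i ^ 2) + (gam - peval p x) + sumR (seq 1 m) (fun i => peval (g i) x)) ^ d.
Proof.
  intros Hx Hlt.
  assert (Hg0 : 0 <= sumR (seq 1 m) (fun i => peval (g i) x))
    by (apply sumR_nonneg; intros i Hi; apply in_seq in Hi; apply Hx; lia).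
  assert (Hge : sumR (seq 1 m) (fun i => peval (g i) x) <= sumR (seq 1 m) eta)
    by (apply sumR_le; intros i Hi; apply in_seq in Hi; apply Heta; auto; lia).
  pose proof (sumR_sq_nonneg (seq 0 n) x). pose proof (HRad x Hx). pose proof (Hbeta x Hx).
  match goal with |- 0 <= ?B ^ d - ?X ^ d => assert (X ^ d <= B ^ d) by (apply pow_incr; lra) end.
  lra.
Qed.

(* A point of [S] with [p x < gamma] gives a zero of [f_gamma] on the chart [y = 1]: take
   [s_0 = sqrt (gamma - p x)], [s_i = sqrt (g_i x)] and [s_(m+1)] the [2d]-th root of the slack
   [B^d - (|x|^2 + |s|^2)^d]. *)
Lemma f_gamma_root gam x : in_S g m x -> peval p x < gam ->
  exists z, z (n + m + 2)%nat = 1 /\ peval (f_gamma n m d Rad eta beta p g gam) z = 0.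
Proof.
  intros Hx Hlt.
  set (Xs := sumR (seq 0 n) (fun i => x i ^ 2) + (gam - peval p x) + sumR (seq 1 m) (fun i => peval (g i) x)).
  set (Bc := Rad + sumR (seq 1 m) eta + beta + gam).
  assert (HgX : forall i, In i (seq 1 m) -> 0 <= peval (g i) x) by (intros i Hi; apply in_seq in Hi; apply Hx; lia).
  destruct (pow_root_exists (Bc ^ d - Xs ^ d) (2 * d) ltac:(lia) (f_gamma_slack_nonneg gam x Hx Hlt)) as [rt Hrt].
  set (z := fun i => if lt_dec i n then x i else if Nat.eq_dec i n then sqrt (gam - peval p x)
            else if lt_dec i (n + m + 1) then sqrt (peval (g (i - n)%nat) x)
            else if Nat.eq_dec i (n + m + 1) then rt else if Nat.eq_dec i (n + m + 2) then 1 else 0).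
  assert (Hzx : forall i, (i < n)%nat -> z i = x i) by (intros i Hi; unfold z; destruct (lt_dec i n); [auto|lia]).
  assert (Hzy : z (n + m + 2)%nat = 1).
  { unfold z. destruct (lt_dec (n + m + 2) n); [lia|]. destruct (Nat.eq_dec (n + m + 2) n); [lia|].
    destruct (lt_dec (n + m + 2) (n + m + 1)); [lia|]. destruct (Nat.eq_dec (n + m + 2) (n + m + 1)); [lia|].
    destruct (Nat.eq_dec (n + m + 2) (n + m + 2)); [auto|lia]. }
  assert (Hz0 : z (n + 0)%nat = sqrt (gam - peval p x)).
  { rewrite Nat.add_0_r. unfold z. destruct (lt_dec n n); [lia|]. destruct (Nat.eq_dec n n); [auto|lia]. }
  assert (Hzi : forall i, (1 <= i <= m)%nat -> z (n + i)%nat = sqrt (peval (g i) x)).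
  { intros i Hi. unfold z. destruct (lt_dec (n + i) n); [lia|]. destruct (Nat.eq_dec (n + i) n); [lia|].
    destruct (lt_dec (n + i) (n + m + 1)); [|lia]. replace (n + i - n)%nat with i by lia. auto. }
  assert (Hzr : z (n + (m + 1))%nat = rt).
  { unfold z. destruct (lt_dec (n + (m + 1)) n); [lia|]. destruct (Nat.eq_dec (n + (m + 1)) n); [lia|].
    destruct (lt_dec (n + (m + 1)) (n + m + 1)); [lia|]. destruct (Nat.eq_dec (n + (m + 1)) (n + m + 1)); [auto|lia]. }
  assert (Hpz : peval p z = peval p x) by (apply (peval_in_vars n); auto).
  assert (Hgz : forall i, (1 <= i <= m)%nat -> peval (g i) z = peval (g i) x) by (intros; apply (peval_in_vars n); auto).
  exists z. split; auto.
  rewrite peval_f_gamma. rewrite Hzy, !pow1, !Rmult_1_r. rewrite peval_homog_y1 by auto. rewrite Hpz, Hz0.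
  rewrite pow2_sqrt by lra.
  rewrite (sumR_zero (seq 1 m)).
  2:{ intros i Hi. apply in_seq in Hi. rewrite peval_homog_y1 by auto. rewrite Hgz, Hzi by lia.
      rewrite ?pow1, ?Rmult_1_r, pow2_sqrt by (apply HgX, in_seq; lia). ring. }
  rewrite (sumR_ext (seq 0 n) _ (fun i => x i ^ 2)) by (intros i Hi; apply in_seq in Hi; rewrite Hzx; auto; lia).
  replace (m + 1)%nat with (S m) by lia. change (seq 0 (S m)) with (0%nat :: seq 1 m).
  change (sumR (0%nat :: seq 1 m) (fun j => z (n + j)%nat ^ 2)) with (z (n + 0)%nat ^ 2 + sumR (seq 1 m) (fun j => z (n + j)%nat ^ 2)).
  rewrite Hz0, pow2_sqrt by lra.
  rewrite (sumR_ext (seq 1 m) (fun j => z (n + j)%nat ^ 2) (fun i => peval (g i) x)).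
  2:{ intros i Hi. apply in_seq in Hi. rewrite Hzi by lia. apply pow2_sqrt, HgX, in_seq; lia. }
  replace (n + S m)%nat with (n + (m + 1))%nat by lia. rewrite Hzr, Hrt.
  fold Bc. replace (sumR (seq 0 n) (fun i => x i ^ 2) + (gam - peval p x + sumR (seq 1 m) (fun i => peval (g i) x)))
    with Xs by (unfold Xs; ring). ring.
Qed.

(* A certificate at level [r] evaluated at a zero of [f_gamma] would give
   [0 <= - |z|^(2D) / (2r) < 0]. *)
Lemma Pol_gamma_le gam r : (1 <= r)%nat ->
  Pol r (n + m + 3) (2 * d) (sub_sqnorm_pow r (n + m + 3) (2 * d) (f_gamma n m d Rad eta beta p g gam)) ->
  forall x, in_S g m x -> gam <= peval p x.
Proof.
  intros Hr HP x Hx.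
  destruct (Rle_lt_dec gam (peval p x)) as [|Hlt]; auto. exfalso.
  destruct (f_gamma_root gam x) as (z & Hzy & Hf0); auto.
  assert (Hnz : exists i, (i < n + m + 3)%nat /\ z i <> 0) by (exists (n + m + 2)%nat; rewrite Hzy; split; [lia|lra]).
  assert (HL := Pol_lower_bound r _ _ _ Hr HP z Hnz).
  unfold sub_sqnorm_pow in HL. rewrite peval_psub, peval_pscale, peval_sqnorm_pow, Hf0 in HL.
  set (Nz := sumR (seq 0 (n + m + 3)) (fun i => z i ^ 2)) in HL.
  assert (HNz : 1 <= Nz).
  { unfold Nz. pose proof (term_le_sumR (seq 0 (n + m + 3)) z (n + m + 2)%nat ltac:(apply in_seq; lia)).
    rewrite Hzy in H. lra. }
  assert (0 < Nz ^ (2 * d)) by (apply pow_lt; lra).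
  assert (HrR : 0 < INR r) by (apply lt_0_INR; lia).
  assert (0 < 1 / (2 * INR r)) by (apply Rdiv_lt_0_compat; lra).
  replace (1 / INR r) with (2 * (1 / (2 * INR r))) in HL by (field; lra). nra.
Qed.

Lemma l_seq_le_pstar r : (1 <= r)%nat -> ER_le (l_seq n m d Rad eta beta p g r) (pstar p g m).
Proof.
  intros Hr. apply ER_sup_le. intros gam Hgam. apply ER_inf_ge. intros v [x [Hx ->]].
  apply (Pol_gamma_le gam r); auto.
Qed.

Lemma pstar_finite_below : pstar p g m <> MInf.
Proof.
  intros E. assert (H : ER_le (Fin (- beta)) (pstar p g m)).
  { apply ER_inf_ge. intros v [x [Hx ->]]. specialize (Hbeta x Hx). lra. }
  rewrite E in H. exact H.
Qed.

End Relaxation.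

Lemma fold_max_ge0 (h : nat -> nat) b l : (b <= fold_right (fun i acc => Nat.max (h i) acc) b l)%nat.
Proof. induction l; simpl; lia. Qed.
Lemma fold_max_ge (h : nat -> nat) b l i : In i l -> (h i <= fold_right (fun i acc => Nat.max (h i) acc) b l)%nat.
Proof. induction l; simpl; [tauto|]. intros [->|H]; [lia|]. specialize (IHl H); lia. Qed.

Lemma mdeg_le_max_deg_p p g m a : coef p a <> 0 -> (mdeg a <= max_deg p g m)%nat.
Proof.
  intros Ha. unfold max_deg.
  pose proof (fold_max_ge0 (fun i => deg (g i)) (deg p) (seq 1 m)). pose proof (mdeg_le_deg p a Ha). lia.
Qed.

Lemma mdeg_le_max_deg_g p g m i a : (1 <= i <= m)%nat -> coef (g i) a <> 0 -> (mdeg a <= max_deg p g m)%nat.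
Proof.
  intros Hi Ha. unfold max_deg.
  pose proof (fold_max_ge (fun i => deg (g i)) (deg p) (seq 1 m) i ltac:(apply in_seq; lia)).
  pose proof (mdeg_le_deg (g i) a Ha). lia.
Qed.

Theorem theorem4p1 (n m d : nat) (p : mpoly) (g : nat -> mpoly)
  (Rad beta : R) (eta : nat -> R) :
  in_vars n p ->
  (forall i, (1 <= i <= m)%nat -> in_vars n (g i)) ->
  d_spec d (max_deg p g m) ->
  0 < Rad ->
  (forall x, in_S g m x -> sumR (seq 0 n) (fun i => x i ^ 2) <= Rad) ->
  (forall i x, (1 <= i <= m)%nat -> in_S g m x -> peval (g i) x <= eta i) ->
  (forall x, in_S g m x -> - peval p x <= beta) ->
  let mr := m_seq (l_seq n m d Rad eta beta p g) in
  (forall r, (1 <= r)%nat -> ER_le (mr r) (pstar p g m)) /\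
  (forall r, (1 <= r)%nat -> ER_le (mr r) (mr (S r))) /\
  ER_cv mr (pstar p g m).
Proof.
  intros Hp Hg [Hd [Hmax _]] _ HRad Heta Hbeta mr.
  assert (Hdp : forall a, coef p a <> 0 -> (mdeg a <= 2 * d)%nat).
  { intros a Ha. pose proof (mdeg_le_max_deg_p p g m a Ha). lia. }
  assert (Hdg : forall i a, (1 <= i <= m)%nat -> coef (g i) a <> 0 -> (mdeg a <= 2 * d)%nat).
  { intros i a Hi Ha. pose proof (mdeg_le_max_deg_g p g m i a Hi Ha). lia. }
  assert (Hl := l_seq_le_pstar n m d p g Rad beta eta Hd Hp Hg HRad Heta Hbeta).
  split; [|split].
  - intros r _. apply m_seq_le, Hl.
  - intros r _. apply ER_max_l.
  - apply m_seq_cv; [apply (pstar_finite_below m p g beta Hbeta)|apply Hl|].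
    intros y Hy1 Hy2. apply (l_seq_eventually_ge n m d p g Rad beta eta Hd Hp Hg Hdp Hdg).
    intros x Hx. apply (ER_lt_le_lt y (pstar p g m)); auto.
    apply ER_inf_le. exists x; auto.
Qed.
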